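(* Fix a nonreal $z\in\mathbb C$ and let $v$ be a nonzero function on $\Gamma$ with $Jv=zv$ at every vertex (such $v$ exists and is unique up to a constant multiple). Then $J$ with domain $\mathcal F(\Gamma)$ is essentially selfadjoint in $\ell^2(\Gamma)$ if and only if $v\notin\ell^2(\Gamma)$.
   Context: Let $\Gamma$ be an infinite connected tree whose vertices are arranged in levels $\ell(x)\in\{0,1,2,\dots\}$: every vertex $x$ is adjacent to exactly one vertex $x'$ with $\ell(x')=\ell(x)+1$; for $\ell(x)\ge 1$ the set $N_x=\{y:\ y'=x\}$ of neighbours of $x$ on level $\ell(x)-1$ is finite and nonempty; $N_x=\emptyset$ if $\ell(x)=0$; there are no other edges. Fix $\lambda_x>0$, $\beta_x\in\mathbb R$ for $x\in\Gamma$. The Jacobi matrix $J$ acts on functions $v:\Gamma\to\mathbb C$ by $(Jv)(x)=\lambda_x v(x')+\beta_x v(x)+\sum_{y\in N_x}\lambda_y v(y)$. $\mathcal F(\Gamma)$ denotes the finitely supported functions on $\Gamma$; $J$ with domain $\mathcal F(\Gamma)$ is a symmetric operator in $\ell^2(\Gamma)$. *)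

From Stdlib Require Import Reals List.
Import ListNotations.
Open Scope R_scope.

Record Cplx : Type := mkC { re : R; im : R }.
Definition C0 : Cplx := mkC 0 0.
Definition RtoC (r : R) : Cplx := mkC r 0.
Definition Cadd (a b : Cplx) : Cplx := mkC (re a + re b) (im a + im b).
Definition Copp (a : Cplx) : Cplx := mkC (- re a) (- im a).
Definition Csub (a b : Cplx) : Cplx := Cadd a (Copp b).
Definition Cmul (a b : Cplx) : Cplx :=
  mkC (re a * re b - im a * im b) (re a * im b + im a * re b).
Definition Cconj (a : Cplx) : Cplx := mkC (re a) (- im a).
Definition Cnorm2 (a : Cplx) : R := re a * re a + im a * im a.

Definition Csum {V : Type} (L : list V) (a : V -> Cplx) : Cplx :=
  fold_right (fun x acc => Cadd (a x) acc) C0 L.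
Definition Rsum {V : Type} (L : list V) (a : V -> R) : R :=
  fold_right (fun x acc => a x + acc) 0 L.

(* ---------- The leveled tree Gamma ----------
   par x = x' (the unique neighbour one level up), lev = level function,
   ch x = an enumeration (without repetition) of N_x = {y : y' = x}. *)
Definition leveled_tree {V : Type} (par : V -> V) (lev : V -> nat)
  (ch : V -> list V) : Prop :=
  (forall x, lev (par x) = S (lev x)) /\
  (forall x, NoDup (ch x)) /\
  (forall x y, In y (ch x) <-> par y = x) /\
  (forall x, ch x = [] <-> lev x = 0%nat) /\
  (* connectedness: any two vertices have a common ancestor *)
  (forall x y, exists m n, Nat.iter m par x = Nat.iter n par y).

Definition l2_bound {V : Type} (u : V -> Cplx) (M : R) : Prop :=
  forall L : list V, NoDup L -> Rsum L (fun x => Cnorm2 (u x)) <= M.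
Definition l2 {V : Type} (u : V -> Cplx) : Prop := exists M, l2_bound u M.

Definition has_sum {V : Type} (a : V -> Cplx) (s : Cplx) : Prop :=
  forall eps, 0 < eps -> exists L0 : list V, forall L, NoDup L -> incl L0 L ->
    Cnorm2 (Csub (Csum L a) s) < eps.

Definition inner {V : Type} (f g : V -> Cplx) (s : Cplx) : Prop :=
  has_sum (fun x => Cmul (Cconj (f x)) (g x)) s.

Definition l2_conv {V : Type} (fn : nat -> V -> Cplx) (u : V -> Cplx) : Prop :=
  forall eps, 0 < eps -> exists N, forall n, (N <= n)%nat ->
    l2_bound (fun x => Csub (fn n x) (u x)) eps.

(* ---------- (possibly unbounded) operators in l^2 as graphs ---------- *)
Definition op (V : Type) := (V -> Cplx) -> (V -> Cplx) -> Prop.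

Definition closure {V : Type} (T : op V) : op V := fun u w =>
  exists fn gn : nat -> V -> Cplx,
    (forall n, T (fn n) (gn n)) /\ l2_conv fn u /\ l2_conv gn w.

Definition adjoint {V : Type} (T : op V) : op V := fun u w =>
  l2 u /\ l2 w /\
  forall f g, T f g -> forall s1 s2, inner g u s1 -> inner f w s2 -> s1 = s2.

Definition selfadjoint {V : Type} (T : op V) : Prop :=
  forall u w, T u w <-> adjoint T u w.

Definition essentially_selfadjoint {V : Type} (T : op V) : Prop :=
  selfadjoint (closure T).

Definition finsupp {V : Type} (f : V -> Cplx) : Prop :=
  exists L : list V, forall x, ~ In x L -> f x = C0.

Definition Japply {V : Type} (par : V -> V) (ch : V -> list V)
  (lam beta : V -> R) (v : V -> Cplx) : V -> Cplx := fun x =>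
  Cadd (Cadd (Cmul (RtoC (lam x)) (v (par x))) (Cmul (RtoC (beta x)) (v x)))
       (Csum (ch x) (fun y => Cmul (RtoC (lam y)) (v y))).

Definition J_fin {V : Type} (par : V -> V) (ch : V -> list V)
  (lam beta : V -> R) : op V := fun f g =>
  finsupp f /\ (forall x, g x = Japply par ch lam beta f x).

From Stdlib Require Import Reals List Lra Psatz Permutation Classical ClassicalEpsilon.
Import ListNotations.
Open Scope R_scope.

(* Write Jz = J - z and T for J on F(Gamma). For finitely supported Phi the number
   sum conj(Phi) J Phi is real, whence |Im z| ||Phi|| <= ||Jz Phi||. This energy estimate
   passes to the closure of T, which therefore has no eigenfunction for z. So if v is in
   l^2, the pair (v, z v), which lies in the adjoint because J is symmetric, is not in the
   closure, and T is not essentially selfadjoint.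

   Conversely, Green's identity on the subtree below a vertex w,
     (z - conj z) sum_{t below w} |v t|^2 = lam w (conj (v w) v (par w) - conj (v (par w)) v w),
   shows that v never vanishes, and that delta x - (v x / S) chi_w (conj v) lies in Jz F(Gamma)
   for every ancestor w of x, S being the mass of v below w. If v is not in l^2 these masses
   are unbounded along the ancestors of x, so Jz F(Gamma) is dense in l^2. Given (u, w) in
   the adjoint, w = J u pointwise; choose Phi_k in F(Gamma) with Jz Phi_k -> w - z u. By the
   energy estimate Phi_k converges to some f with Jz f = Jz u, and f - u, being annihilated
   by Jz, is orthogonal (for the bilinear pairing) to the dense range, hence zero. Thus (u, w)
   lies in the closure. *)

(** * Complex arithmetic *)

Definition Cone : Cplx := mkC 1 0.
Definition Cinv (a : Cplx) : Cplx := mkC (re a / Cnorm2 a) (- im a / Cnorm2 a).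
Definition Cdiv (a b : Cplx) : Cplx := Cmul a (Cinv b).

Lemma Cplx_eq (a b : Cplx) : re a = re b -> im a = im b -> a = b.
Proof. destruct a, b; simpl; intros; subst; reflexivity. Qed.

Lemma Cplx_ring_theory : ring_theory C0 Cone Cadd Cmul Csub Copp (@eq Cplx).
Proof.
  constructor; intros; apply Cplx_eq; unfold Csub, Cadd, Cmul, Copp, C0, Cone; simpl; ring.
Qed.

Lemma Cnorm2_nonneg a : 0 <= Cnorm2 a.
Proof. unfold Cnorm2; nra. Qed.

Lemma Cnorm2_eq0 a : Cnorm2 a = 0 -> a = C0.
Proof. unfold Cnorm2; intros H; apply Cplx_eq; simpl; nra. Qed.

Lemma Cnorm2_pos a : a <> C0 -> 0 < Cnorm2 a.
Proof.
  intros H. destruct (Cnorm2_nonneg a) as [h|h]; auto.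
  exfalso; apply H, Cnorm2_eq0; auto.
Qed.

Lemma Cplx_field_theory :
  field_theory C0 Cone Cadd Cmul Csub Copp Cdiv Cinv (@eq Cplx).
Proof.
  constructor.
  - exact Cplx_ring_theory.
  - intro H. injection H. lra.
  - reflexivity.
  - intros p Hp. apply Cplx_eq; unfold Cinv, Cmul, Cone; simpl;
    pose proof (Cnorm2_pos p Hp) as Hn; unfold Cnorm2 in *; field; lra.
Qed.

Add Field Cplx_field : Cplx_field_theory.

Lemma Cnorm2_mul a b : Cnorm2 (Cmul a b) = Cnorm2 a * Cnorm2 b.
Proof. unfold Cnorm2, Cmul; simpl; ring. Qed.

Lemma Cnorm2_conj a : Cnorm2 (Cconj a) = Cnorm2 a.
Proof. unfold Cnorm2, Cconj; simpl; ring. Qed.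

Lemma Cnorm2_opp a : Cnorm2 (Copp a) = Cnorm2 a.
Proof. unfold Cnorm2, Copp; simpl; ring. Qed.

Lemma Cnorm2_RtoC r : Cnorm2 (RtoC r) = r * r.
Proof. unfold Cnorm2, RtoC; simpl; ring. Qed.

Lemma Cnorm2_C0 : Cnorm2 C0 = 0.
Proof. unfold Cnorm2, C0; simpl; ring. Qed.

Lemma Cnorm2_add_le a b : Cnorm2 (Cadd a b) <= 2 * Cnorm2 a + 2 * Cnorm2 b.
Proof.
  unfold Cnorm2, Cadd; simpl.
  pose proof (pow2_ge_0 (re a - re b)); pose proof (pow2_ge_0 (im a - im b)); nra.
Qed.

Lemma Cnorm2_sub_le a b : Cnorm2 (Csub a b) <= 2 * Cnorm2 a + 2 * Cnorm2 b.
Proof. unfold Csub. rewrite <- (Cnorm2_opp b). apply Cnorm2_add_le. Qed.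

Lemma Cnorm2_add4_le a b c d :
  Cnorm2 (Cadd (Cadd a b) (Cadd c d)) <= 4 * (Cnorm2 a + Cnorm2 b + Cnorm2 c + Cnorm2 d).
Proof.
  pose proof (Cnorm2_add_le (Cadd a b) (Cadd c d)).
  pose proof (Cnorm2_add_le a b). pose proof (Cnorm2_add_le c d). lra.
Qed.

Lemma re_sqr_le_Cnorm2 a : re a * re a <= Cnorm2 a.
Proof. unfold Cnorm2; nra. Qed.

Lemma im_sqr_le_Cnorm2 a : im a * im a <= Cnorm2 a.
Proof. unfold Cnorm2; nra. Qed.

Lemma Cnorm2_le_all_eq0 a : (forall e, 0 < e -> Cnorm2 a <= e) -> a = C0.
Proof.
  intros H. apply Cnorm2_eq0. pose proof (Cnorm2_nonneg a) as [Hpos|Hz]; auto.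
  specialize (H (Cnorm2 a / 2)). lra.
Qed.

Lemma Cnorm2_le_all_mul_eq0 a A : 0 < A ->
  (forall d, 0 < d -> d <= 1 -> Cnorm2 a <= d * A) -> a = C0.
Proof.
  intros HA H. apply Cnorm2_le_all_eq0. intros e He.
  set (d := Rmin 1 (e / A)).
  assert (Hd0 : 0 < d) by (apply Rmin_glb_lt; [lra|apply Rdiv_lt_0_compat; lra]).
  assert (Hde : d <= e / A) by apply Rmin_r.
  eapply Rle_trans; [apply (H d Hd0 (Rmin_l _ _))|].
  apply (Rmult_le_compat_r A) in Hde; [|lra].
  replace (e / A * A) with e in Hde by (field; lra). lra.
Qed.

Lemma Csub_eq0 a b : Csub a b = C0 -> a = b.
Proof. intros H. assert (E : a = Cadd (Csub a b) b) by ring. rewrite E, H. ring. Qed.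

Lemma Cconj_add a b : Cconj (Cadd a b) = Cadd (Cconj a) (Cconj b).
Proof. apply Cplx_eq; simpl; ring. Qed.

Lemma Cconj_mul a b : Cconj (Cmul a b) = Cmul (Cconj a) (Cconj b).
Proof. apply Cplx_eq; simpl; ring. Qed.

Lemma Cconj_RtoC r : Cconj (RtoC r) = RtoC r.
Proof. apply Cplx_eq; simpl; ring. Qed.

Lemma Cconj_C0 : Cconj C0 = C0.
Proof. apply Cplx_eq; simpl; ring. Qed.

Lemma Cconj_Cone : Cconj Cone = Cone.
Proof. apply Cplx_eq; simpl; ring. Qed.

Lemma Cconj_involutive a : Cconj (Cconj a) = a.
Proof. apply Cplx_eq; simpl; ring. Qed.

Lemma Cmul_conj_l a : Cmul (Cconj a) a = RtoC (Cnorm2 a).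
Proof. apply Cplx_eq; unfold Cnorm2; simpl; ring. Qed.

Lemma RtoC_add a b : RtoC (a + b) = Cadd (RtoC a) (RtoC b).
Proof. apply Cplx_eq; simpl; ring. Qed.

Lemma RtoC_inv r : r <> 0 -> RtoC (/ r) = Cinv (RtoC r).
Proof. intros H. apply Cplx_eq; unfold Cinv, Cnorm2, RtoC; simpl; field; auto. Qed.

Lemma RtoC_neq0 a : a <> 0 -> RtoC a <> C0.
Proof. intros H H'; injection H'; auto. Qed.

Lemma Cmul_eq0_r a b : a <> C0 -> Cmul a b = C0 -> b = C0.
Proof.
  intros Ha H. apply Cnorm2_eq0. apply Cnorm2_pos in Ha.
  assert (E : Cnorm2 (Cmul a b) = 0) by (rewrite H; apply Cnorm2_C0).
  rewrite Cnorm2_mul in E. pose proof (Cnorm2_nonneg b). nra.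
Qed.

Lemma Csub_conj_neq0 z : im z <> 0 -> Csub z (Cconj z) <> C0.
Proof. intros H H'. injection H'. intros. lra. Qed.

Lemma im_sqr_pos z : im z <> 0 -> 0 < im z * im z.
Proof. intros H. destruct (Rtotal_order (im z) 0) as [h|[h|h]]; [nra|contradiction|nra]. Qed.

(** * Finite sums over lists *)

Section FiniteSums.
Context {V : Type}.
Implicit Types (L K : list V).

Lemma Csum_app L1 L2 a : Csum (L1 ++ L2) a = Cadd (Csum L1 a) (Csum L2 a).
Proof. induction L1; simpl. - apply Cplx_eq; simpl; ring. - rewrite IHL1. ring. Qed.

Lemma Csum_perm L1 L2 a : Permutation L1 L2 -> Csum L1 a = Csum L2 a.
Proof. induction 1; simpl; try congruence. ring. Qed.

Lemma Csum_ext_in L a b : (forall x, In x L -> a x = b x) -> Csum L a = Csum L b.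
Proof. induction L; simpl; intros H; auto. rewrite H, IHL; auto. Qed.

Lemma Csum_add L a b :
  Csum L (fun x => Cadd (a x) (b x)) = Cadd (Csum L a) (Csum L b).
Proof. induction L; simpl. - apply Cplx_eq; simpl; ring. - rewrite IHL; ring. Qed.

Lemma Csum_sub L a b :
  Csum L (fun x => Csub (a x) (b x)) = Csub (Csum L a) (Csum L b).
Proof. induction L; simpl. - apply Cplx_eq; simpl; ring. - rewrite IHL; ring. Qed.

Lemma Csum_opp L a : Csum L (fun x => Copp (a x)) = Copp (Csum L a).
Proof. induction L; simpl. - apply Cplx_eq; simpl; ring. - rewrite IHL; ring. Qed.

Lemma Csum_mull L c a : Csum L (fun x => Cmul c (a x)) = Cmul c (Csum L a).
Proof. induction L; simpl. - apply Cplx_eq; simpl; ring. - rewrite IHL; ring. Qed.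

Lemma Csum_mulr L c a : Csum L (fun x => Cmul (a x) c) = Cmul (Csum L a) c.
Proof. induction L; simpl. - apply Cplx_eq; simpl; ring. - rewrite IHL; ring. Qed.

Lemma Csum_conj L a : Csum L (fun x => Cconj (a x)) = Cconj (Csum L a).
Proof.
  induction L; simpl. - apply Cplx_eq; simpl; ring. - rewrite IHL, Cconj_add; auto.
Qed.

Lemma Csum_RtoC L (a : V -> R) : Csum L (fun x => RtoC (a x)) = RtoC (Rsum L a).
Proof.
  induction L; simpl. - apply Cplx_eq; simpl; ring. - rewrite IHL, RtoC_add; auto.
Qed.

Lemma Csum_eq0 L a : (forall x, In x L -> a x = C0) -> Csum L a = C0.
Proof. induction L; simpl; intros H; auto. rewrite H, IHL; auto. ring. Qed.

Lemma Csum_eq_single L a y :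
  NoDup L -> In y L -> (forall x, In x L -> x <> y -> a x = C0) -> Csum L a = a y.
Proof.
  induction L as [|b L IH]; simpl; intros Hnd Hin H; [contradiction|].
  inversion Hnd; subst. destruct Hin as [<-|Hin].
  - rewrite Csum_eq0. ring. intros x Hx. apply H; auto. intro; subst; contradiction.
  - rewrite IH; auto. rewrite H; auto. ring. intro; subst; contradiction.
Qed.

Lemma Rsum_app L1 L2 a : Rsum (L1 ++ L2) a = Rsum L1 a + Rsum L2 a.
Proof. induction L1; simpl. - ring. - rewrite IHL1. ring. Qed.

Lemma Rsum_perm L1 L2 a : Permutation L1 L2 -> Rsum L1 a = Rsum L2 a.
Proof. induction 1; simpl; lra. Qed.

Lemma Rsum_ext_in L a b : (forall x, In x L -> a x = b x) -> Rsum L a = Rsum L b.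
Proof. induction L; simpl; intros H; auto. rewrite H, IHL; auto. Qed.

Lemma Rsum_le L a b : (forall x, In x L -> a x <= b x) -> Rsum L a <= Rsum L b.
Proof.
  induction L as [|y L IH]; simpl; intros H. - lra.
  - pose proof (H y (or_introl eq_refl)). pose proof (IH (fun x Hx => H x (or_intror Hx))). lra.
Qed.

Lemma Rsum_nonneg L a : (forall x, In x L -> 0 <= a x) -> 0 <= Rsum L a.
Proof.
  induction L as [|y L IH]; simpl; intros H. - lra.
  - pose proof (H y (or_introl eq_refl)). pose proof (IH (fun x Hx => H x (or_intror Hx))). lra.
Qed.

Lemma Rsum_add L a b : Rsum L (fun x => a x + b x) = Rsum L a + Rsum L b.
Proof. induction L; simpl. - ring. - rewrite IHL; ring. Qed.

Lemma Rsum_mull L c a : Rsum L (fun x => c * a x) = c * Rsum L a.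
Proof. induction L; simpl. - ring. - rewrite IHL; ring. Qed.

Lemma Rsum_eq0 L a : (forall x, In x L -> a x = 0) -> Rsum L a = 0.
Proof. induction L; simpl; intros H; auto. rewrite H, IHL; auto. ring. Qed.

Lemma Rsum_nonneg_eq0 L a :
  (forall x, 0 <= a x) -> Rsum L a = 0 -> forall x, In x L -> a x = 0.
Proof.
  induction L as [|b L IH]; simpl; intros Hp H x Hx; [contradiction|].
  pose proof (Rsum_nonneg L a (fun y _ => Hp y)). pose proof (Hp b).
  destruct Hx as [<-|Hx]. - lra. - apply IH; auto. lra.
Qed.


Lemma exists_NoDup_filter (P : V -> Prop) (A : list V) :
  exists L, NoDup L /\ forall x, In x L <-> In x A /\ P x.
Proof.
  induction A as [|a A [L [HL HiL]]].
  - exists []; split; [constructor|]; simpl; tauto.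
  - destruct (classic (P a /\ ~ In a L)) as [[Hp Hn]|Hn].
    + exists (a :: L); split; [constructor; auto|].
      intros x; simpl; rewrite HiL; split.
      * intros [<-|[]]; auto.
      * intros [[<-|Hx] Hp']; auto.
    + exists L; split; auto. intros x; rewrite HiL; simpl; split.
      * intros [Hx Hp]; auto.
      * intros [[<-|Hx] Hp]; auto. split; auto.
        apply NNPP; intro Hc. apply Hn; split; auto. rewrite HiL. tauto.
Qed.

Lemma exists_NoDup_cover (A : list V) :
  exists L, NoDup L /\ forall x, In x L <-> In x A.
Proof.
  destruct (exists_NoDup_filter (fun _ => True) A) as [L [H1 H2]].
  exists L; split; auto. intros x; rewrite H2; tauto.
Qed.

Lemma exists_NoDup_incl2 (A B : list V) : exists L, NoDup L /\ incl A L /\ incl B L.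
Proof.
  destruct (exists_NoDup_cover (A ++ B)) as [L [H1 H2]].
  exists L; split; auto; split; intros x Hx; apply H2; apply in_or_app; auto.
Qed.

Lemma NoDup_app_notin K L x : NoDup (K ++ L) -> In x L -> ~ In x K.
Proof.
  induction K; simpl; intros H Hx; auto.
  inversion H; subst. intros [<-|Hk].
  - apply H2; apply in_or_app; auto.
  - apply IHK; auto.
Qed.

Lemma NoDup_incl_Permutation_app K L : NoDup K -> NoDup L -> incl K L ->
  exists M, Permutation L (K ++ M).
Proof.
  revert L; induction K as [|k K IH]; intros L HK HL Hi.
  - exists L; simpl; auto.
  - inversion HK; subst.
    assert (Hk : In k L) by (apply Hi; left; auto).
    destruct (in_split _ _ Hk) as [L1 [L2 ->]].
    destruct (IH (L1 ++ L2)) as [M HM]; auto.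
    + eapply NoDup_remove_1; eauto.
    + intros x Hx. assert (In x (L1 ++ k :: L2)) by (apply Hi; right; auto).
      apply in_app_or in H. apply in_or_app. destruct H as [H|[H|H]]; auto.
      subst; contradiction.
    + exists M. simpl. eapply Permutation_trans.
      * apply Permutation_sym, Permutation_middle.
      * apply perm_skip; auto.
Qed.

Lemma NoDup_incl_split K L : NoDup K -> NoDup L -> incl K L ->
  exists M, Permutation L (K ++ M) /\ forall x, In x M -> In x L /\ ~ In x K.
Proof.
  intros HK HL Hi. destruct (NoDup_incl_Permutation_app K L HK HL Hi) as [M HM].
  exists M; split; auto. intros x Hx. split.
  - apply (Permutation_in x (Permutation_sym HM)). apply in_or_app; auto.
  - apply (NoDup_app_notin K M); auto. eapply Permutation_NoDup; eauto.
Qed.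

Lemma Csum_incl_support K L a : NoDup K -> NoDup L -> incl K L ->
  (forall x, In x L -> ~ In x K -> a x = C0) -> Csum L a = Csum K a.
Proof.
  intros HK HL Hi H. destruct (NoDup_incl_split K L HK HL Hi) as [M [HM HiM]].
  rewrite (Csum_perm _ _ _ HM), Csum_app, (Csum_eq0 M). - ring.
  - intros x Hx. apply H; apply HiM; auto.
Qed.

Lemma Rsum_incl_support K L a : NoDup K -> NoDup L -> incl K L ->
  (forall x, In x L -> ~ In x K -> a x = 0) -> Rsum L a = Rsum K a.
Proof.
  intros HK HL Hi H. destruct (NoDup_incl_split K L HK HL Hi) as [M [HM HiM]].
  rewrite (Rsum_perm _ _ _ HM), Rsum_app, (Rsum_eq0 M). - ring.
  - intros x Hx. apply H; apply HiM; auto.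
Qed.

Lemma Rsum_le_incl K L a : NoDup K -> NoDup L -> incl K L ->
  (forall x, 0 <= a x) -> Rsum K a <= Rsum L a.
Proof.
  intros HK HL Hi H. destruct (NoDup_incl_split K L HK HL Hi) as [M [HM _]].
  rewrite (Rsum_perm _ _ _ HM), Rsum_app.
  pose proof (Rsum_nonneg M a (fun x _ => H x)). lra.
Qed.

Lemma Rsum_le_support K L a : NoDup K -> NoDup L ->
  (forall x, 0 <= a x) -> (forall x, ~ In x K -> a x = 0) -> Rsum L a <= Rsum K a.
Proof.
  intros HK HL Hp Hz.
  destruct (exists_NoDup_filter (fun x => In x K) L) as [M [HM HiM]].
  assert (HML : incl M L) by (intros x Hx; apply HiM; auto).
  rewrite (Rsum_incl_support M L a HM HL HML).
  - apply Rsum_le_incl; auto. intros x Hx; apply HiM; auto.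
  - intros x Hx Hn. apply Hz. intro Hk. apply Hn, HiM; auto.
Qed.

End FiniteSums.

Lemma Csum_comm {V W : Type} (L : list V) (K : list W) F :
  Csum L (fun x => Csum K (fun y => F x y)) = Csum K (fun y => Csum L (fun x => F x y)).
Proof.
  induction L; simpl.
  - symmetry. induction K; simpl; auto. rewrite IHK. apply Cplx_eq; simpl; ring.
  - rewrite IHL. symmetry. apply (Csum_add K (fun y => F a y) (fun y => Csum L (fun x => F x y))).
Qed.

Lemma Cauchy_Schwarz_Csum {V : Type} (L : list V) a b :
  Cnorm2 (Csum L (fun x => Cmul (a x) (b x))) <=
  Rsum L (fun x => Cnorm2 (a x)) * Rsum L (fun x => Cnorm2 (b x)).
Proof.
  induction L as [|y L IH]; simpl.
  - unfold Cnorm2, C0; simpl; lra.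
  - set (A := Csum L (fun x => Cmul (a x) (b x))) in *.
    set (P := Rsum L (fun x => Cnorm2 (a x))) in *.
    set (Q := Rsum L (fun x => Cnorm2 (b x))) in *.
    assert (HP : 0 <= P) by (apply Rsum_nonneg; intros; apply Cnorm2_nonneg).
    assert (HQ : 0 <= Q) by (apply Rsum_nonneg; intros; apply Cnorm2_nonneg).
    set (m := Cmul (a y) (b y)).
    assert (Hm : Cnorm2 m = Cnorm2 (a y) * Cnorm2 (b y)) by apply Cnorm2_mul.
    set (na := Cnorm2 (a y)) in *. set (nb := Cnorm2 (b y)) in *.
    assert (Hna : 0 <= na) by apply Cnorm2_nonneg.
    assert (Hnb : 0 <= nb) by apply Cnorm2_nonneg.
    set (X := re A * re m + im A * im m).
    assert (H1 : X * X <= Cnorm2 A * Cnorm2 m).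
    { unfold X, Cnorm2. pose proof (pow2_ge_0 (re A * im m - im A * re m)). nra. }
    assert (H2 : Cnorm2 A * Cnorm2 m <= P * Q * (na * nb)).
    { rewrite Hm. apply Rmult_le_compat_r; [nra|]. auto. }
    (* the cross term: 2X <= 2 sqrt(PQ na nb) <= P nb + Q na *)
    assert (H3 : 2 * X <= P * nb + Q * na).
    { assert (Hsq : (2 * X) * (2 * X) <= (P * nb + Q * na) * (P * nb + Q * na)).
      { pose proof (pow2_ge_0 (P * nb - Q * na)). nra. }
      apply Rsqr_incr_0_var; [exact Hsq|nra]. }
    assert (E : Cnorm2 (Cadd m A) = Cnorm2 m + 2 * X + Cnorm2 A).
    { unfold Cnorm2, X, Cadd; simpl. ring. }
    rewrite E, Hm. nra.
Qed.

(** * Square-summable functions *)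

Section SquareSummable.
Context {V : Type}.
Implicit Types (f g h u w : V -> Cplx) (fn gn : nat -> V -> Cplx) (L K : list V).

Definition sum_norm2 L f : R := Rsum L (fun x => Cnorm2 (f x)).

Lemma sum_norm2_nonneg L f : 0 <= sum_norm2 L f.
Proof. apply Rsum_nonneg; intros; apply Cnorm2_nonneg. Qed.

Lemma l2_bound_ext f g M : (forall x, f x = g x) -> l2_bound f M -> l2_bound g M.
Proof.
  intros E H L HL. specialize (H L HL). erewrite Rsum_ext_in; eauto.
  intros x _; simpl; rewrite E; auto.
Qed.

Lemma l2_bound_mono f M M' : M <= M' -> l2_bound f M -> l2_bound f M'.
Proof. intros H1 H2 L HL. specialize (H2 L HL). lra. Qed.

Lemma l2_bound_nonneg f M : l2_bound f M -> 0 <= M.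
Proof. intros H. specialize (H [] (NoDup_nil _)). simpl in H. auto. Qed.

Lemma l2_bound_point f M x : l2_bound f M -> Cnorm2 (f x) <= M.
Proof.
  intros H. assert (Hn : NoDup [x]) by (constructor; [simpl; tauto|constructor]).
  specialize (H [x] Hn). simpl in H. lra.
Qed.

Lemma l2_bound_eq0 f M : (forall x, f x = C0) -> 0 <= M -> l2_bound f M.
Proof. intros H HM L HL. rewrite Rsum_eq0; [lra|]. intros; rewrite H; apply Cnorm2_C0. Qed.

Lemma l2_bound_add f g a b : l2_bound f a -> l2_bound g b ->
  l2_bound (fun x => Cadd (f x) (g x)) (2 * a + 2 * b).
Proof.
  intros Hf Hg L HL. specialize (Hf L HL). specialize (Hg L HL).
  eapply Rle_trans. - apply Rsum_le. intros x _. apply Cnorm2_add_le.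
  - rewrite Rsum_add, !Rsum_mull. lra.
Qed.

Lemma l2_bound_sub f g a b : l2_bound f a -> l2_bound g b ->
  l2_bound (fun x => Csub (f x) (g x)) (2 * a + 2 * b).
Proof.
  intros Hf Hg L HL. specialize (Hf L HL). specialize (Hg L HL).
  eapply Rle_trans. - apply Rsum_le. intros x _. apply Cnorm2_sub_le.
  - rewrite Rsum_add, !Rsum_mull. lra.
Qed.

Lemma l2_bound_scale c f a : l2_bound f a -> l2_bound (fun x => Cmul c (f x)) (Cnorm2 c * a).
Proof.
  intros Hf L HL. specialize (Hf L HL).
  erewrite Rsum_ext_in. 2:{ intros x _. rewrite Cnorm2_mul. reflexivity. }
  rewrite Rsum_mull. apply Rmult_le_compat_l; auto. apply Cnorm2_nonneg.
Qed.

Lemma l2_sub f g : l2 f -> l2 g -> l2 (fun x => Csub (f x) (g x)).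
Proof. intros [a Ha] [b Hb]. eexists. apply l2_bound_sub; eauto. Qed.

Lemma l2_scale c f : l2 f -> l2 (fun x => Cmul c (f x)).
Proof. intros [a Ha]. eexists. apply l2_bound_scale; eauto. Qed.

Lemma finsupp_NoDup f : finsupp f -> exists K, NoDup K /\ forall x, ~ In x K -> f x = C0.
Proof.
  intros [L HL]. destruct (exists_NoDup_cover L) as [K [HK HiK]].
  exists K; split; auto. intros x Hx; apply HL; intro; apply Hx, HiK; auto.
Qed.

Lemma finsupp_l2_bound f K : NoDup K -> (forall x, ~ In x K -> f x = C0) ->
  l2_bound f (sum_norm2 K f).
Proof.
  intros HK Hf L HL. apply Rsum_le_support; auto.
  - intros; apply Cnorm2_nonneg.
  - intros x Hx; rewrite Hf; auto; apply Cnorm2_C0.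
Qed.

Lemma finsupp_l2 f : finsupp f -> l2 f.
Proof.
  intros Hf. destruct (finsupp_NoDup f Hf) as [K [HK Hz]].
  exists (sum_norm2 K f). apply finsupp_l2_bound; auto.
Qed.

Lemma finsupp_add f g : finsupp f -> finsupp g -> finsupp (fun x => Cadd (f x) (g x)).
Proof.
  intros [K1 H1] [K2 H2]. exists (K1 ++ K2). intros x Hx.
  rewrite H1, H2; [apply Cplx_eq; simpl; ring| |].
  all: intro; apply Hx; apply in_or_app; auto.
Qed.

Lemma finsupp_sub f g : finsupp f -> finsupp g -> finsupp (fun x => Csub (f x) (g x)).
Proof.
  intros [K1 H1] [K2 H2]. exists (K1 ++ K2). intros x Hx.
  rewrite H1, H2; [apply Cplx_eq; simpl; ring| |].
  all: intro; apply Hx; apply in_or_app; auto.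
Qed.

Lemma finsupp_scale c f : finsupp f -> finsupp (fun x => Cmul c (f x)).
Proof. intros [K H]. exists K. intros x Hx. rewrite H; auto. apply Cplx_eq; simpl; ring. Qed.

Lemma finsupp_zero : finsupp (fun _ : V => C0).
Proof. exists []. auto. Qed.

Lemma Csum_mul_le L f g a b : NoDup L -> l2_bound f a -> l2_bound g b ->
  Cnorm2 (Csum L (fun x => Cmul (f x) (g x))) <= a * b.
Proof.
  intros HL Hf Hg. eapply Rle_trans. - apply Cauchy_Schwarz_Csum.
  - apply Rmult_le_compat; auto; apply Rsum_nonneg; intros; apply Cnorm2_nonneg.
Qed.

Lemma l2_bound_conj f a : l2_bound f a -> l2_bound (fun x => Cconj (f x)) a.
Proof.
  intros Hf L HL. rewrite <- (Hf L HL). apply Req_le, Rsum_ext_in.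
  intros; apply Cnorm2_conj.
Qed.

Lemma Csum_conj_mul_le L f g a b : NoDup L -> l2_bound f a -> l2_bound g b ->
  Cnorm2 (Csum L (fun x => Cmul (Cconj (f x)) (g x))) <= a * b.
Proof. intros HL Hf Hg. apply Csum_mul_le; auto. apply l2_bound_conj; auto. Qed.

Lemma l2_conv_l2 fn u : (forall n, l2 (fn n)) -> l2_conv fn u -> l2 u.
Proof.
  intros Hl Hc. destruct (Hc 1 Rlt_0_1) as [N HN]. specialize (HN N (le_n N)).
  destruct (Hl N) as [M HM]. exists (2 * M + 2 * 1).
  eapply l2_bound_ext; [|apply (l2_bound_sub (fn N) (fun x => Csub (fn N x) (u x)) M 1); auto].
  intros x; simpl. apply Cplx_eq; simpl; ring.
Qed.

Lemma l2_conv_const u : l2_conv (fun _ => u) u.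
Proof.
  intros e He. exists 0%nat. intros n _. apply l2_bound_eq0; [|lra].
  intros; apply Cplx_eq; simpl; ring.
Qed.

Lemma l2_conv_ext fn gn u w : (forall n x, fn n x = gn n x) -> (forall x, u x = w x) ->
  l2_conv fn u -> l2_conv gn w.
Proof.
  intros Hfg Huw Hc e He. destruct (Hc e He) as [N HN]. exists N. intros n Hn.
  eapply l2_bound_ext; [|apply (HN n Hn)]. intros x; simpl. rewrite Hfg, Huw. auto.
Qed.

Lemma l2_conv_add fn gn u w : l2_conv fn u -> l2_conv gn w ->
  l2_conv (fun n x => Cadd (fn n x) (gn n x)) (fun x => Cadd (u x) (w x)).
Proof.
  intros Hf Hg e He.
  destruct (Hf (e / 4)) as [N1 HN1]; [lra|]. destruct (Hg (e / 4)) as [N2 HN2]; [lra|].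
  exists (N1 + N2)%nat. intros n Hn.
  eapply l2_bound_mono;
    [|eapply l2_bound_ext; [|apply (l2_bound_add _ _ _ _ (HN1 n ltac:(lia)) (HN2 n ltac:(lia)))]].
  - lra.
  - intros x; simpl. ring.
Qed.

Lemma l2_conv_scale c fn u : l2_conv fn u ->
  l2_conv (fun n x => Cmul c (fn n x)) (fun x => Cmul c (u x)).
Proof.
  intros Hf e He. pose proof (Cnorm2_nonneg c) as Hc.
  destruct (Hf (e / (Cnorm2 c + 1))) as [N HN]. { apply Rdiv_lt_0_compat; lra. }
  exists N. intros n Hn.
  eapply l2_bound_mono; [|eapply l2_bound_ext; [|apply (l2_bound_scale c _ _ (HN n Hn))]].
  - apply (Rmult_le_reg_r (Cnorm2 c + 1)); [lra|].
    replace (Cnorm2 c * (e / (Cnorm2 c + 1)) * (Cnorm2 c + 1)) with (Cnorm2 c * e)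
      by (field; lra). nra.
  - intros x; simpl. ring.
Qed.

Lemma l2_conv_Cauchy fn u : l2_conv fn u -> forall e, 0 < e -> exists N,
  forall k l, (N <= k)%nat -> (N <= l)%nat -> l2_bound (fun x => Csub (fn k x) (fn l x)) e.
Proof.
  intros Hf e He. destruct (Hf (e / 4)) as [N HN]; [lra|].
  exists N. intros k l Hk Hl.
  eapply l2_bound_mono; [|eapply l2_bound_ext; [|apply (l2_bound_sub _ _ _ _ (HN k Hk) (HN l Hl))]].
  - lra.
  - intros x; simpl. ring.
Qed.

Lemma Csum_inner_approx L g (g1 : V -> Cplx) u (u1 : V -> Cplx) Mg Mu d : NoDup L -> l2_bound g Mg -> l2_bound u Mu ->
  l2_bound (fun x => Csub (g1 x) (g x)) d -> l2_bound (fun x => Csub (u1 x) (u x)) d -> d <= 1 ->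
  Cnorm2 (Csub (Csum L (fun x => Cmul (Cconj (g1 x)) (u1 x)))
               (Csum L (fun x => Cmul (Cconj (g x)) (u x)))) <= (2 * Mu + 2 * (2 * Mg + 2)) * d.
Proof.
  intros HL Hg Hu Hgd Hud Hd.
  rewrite <- Csum_sub.
  rewrite (Csum_ext_in L _ (fun x => Cadd (Cmul (Cconj (Csub (g1 x) (g x))) (u x))
                                        (Cmul (Cconj (g1 x)) (Csub (u1 x) (u x))))).
  2:{ intros x _. apply Cplx_eq; simpl; ring. }
  rewrite Csum_add.
  eapply Rle_trans; [apply Cnorm2_add_le|].
  assert (Hg1 : l2_bound g1 (2 * Mg + 2 * d)).
  { eapply l2_bound_ext; [|apply (l2_bound_add g (fun x => Csub (g1 x) (g x)) Mg d); auto].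
    intros x; simpl; apply Cplx_eq; simpl; ring. }
  pose proof (Csum_conj_mul_le L _ _ _ _ HL Hgd Hu).
  pose proof (Csum_conj_mul_le L _ _ _ _ HL Hg1 Hud).
  pose proof (l2_bound_nonneg _ _ Hg). pose proof (l2_bound_nonneg _ _ Hu).
  pose proof (l2_bound_nonneg _ _ Hgd).
  assert ((2 * Mg + 2 * d) * d <= (2 * Mg + 2) * d) by nra.
  nra.
Qed.

Lemma inner_eq_of_approx f g u w fn gn un wn :
  l2 f -> l2 g -> l2 u -> l2 w ->
  l2_conv fn f -> l2_conv gn g -> l2_conv un u -> l2_conv wn w ->
  (forall n m, exists L0, forall L, NoDup L -> incl L0 L ->
     Csum L (fun x => Cmul (Cconj (gn n x)) (un m x)) =
     Csum L (fun x => Cmul (Cconj (fn n x)) (wn m x))) ->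
  forall s1 s2, inner g u s1 -> inner f w s2 -> s1 = s2.
Proof.
  intros [Mf Hf] [Mg Hg] [Mu Hu] [Mw Hw] Cf Cg Cu Cw Heq s1 s2 H1 H2.
  apply Csub_eq0.
  set (A1 := 2 * Mu + 2 * (2 * Mg + 2)). set (A2 := 2 * Mw + 2 * (2 * Mf + 2)).
  pose proof (l2_bound_nonneg _ _ Hf). pose proof (l2_bound_nonneg _ _ Hg).
  pose proof (l2_bound_nonneg _ _ Hu). pose proof (l2_bound_nonneg _ _ Hw).
  apply (Cnorm2_le_all_mul_eq0 _ (4 * (2 + A1 + A2))); [unfold A1, A2; lra|].
  intros d Hd0 Hd1.
  destruct (Cf d Hd0) as [N1 HN1]. destruct (Cg d Hd0) as [N2 HN2].
  destruct (Cu d Hd0) as [N3 HN3]. destruct (Cw d Hd0) as [N4 HN4].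
  set (n := (N1 + N2)%nat). set (m := (N3 + N4)%nat).
  specialize (HN1 n ltac:(unfold n; lia)). specialize (HN2 n ltac:(unfold n; lia)).
  specialize (HN3 m ltac:(unfold m; lia)). specialize (HN4 m ltac:(unfold m; lia)).
  destruct (Heq n m) as [L0 HL0].
  destruct (H1 d Hd0) as [L1 HL1]. destruct (H2 d Hd0) as [L2 HL2].
  destruct (exists_NoDup_cover (L0 ++ L1 ++ L2)) as [L [HL HiL]].
  assert (i0 : incl L0 L) by (intros x Hx; apply HiL, in_or_app; auto).
  assert (i1 : incl L1 L)
    by (intros x Hx; apply HiL, in_or_app; right; apply in_or_app; auto).
  assert (i2 : incl L2 L)
    by (intros x Hx; apply HiL, in_or_app; right; apply in_or_app; auto).
  specialize (HL0 L HL i0). specialize (HL1 L HL i1). specialize (HL2 L HL i2).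
  pose proof (Csum_inner_approx L g (gn n) u (un m) Mg Mu d HL Hg Hu HN2 HN3 Hd1) as E1.
  pose proof (Csum_inner_approx L f (fn n) w (wn m) Mf Mw d HL Hf Hw HN1 HN4 Hd1) as E2.
  fold A1 in E1. fold A2 in E2. rewrite HL0 in E1.
  set (P := Csum L (fun x => Cmul (Cconj (g x)) (u x))) in *.
  set (Q := Csum L (fun x => Cmul (Cconj (f x)) (w x))) in *.
  set (S := Csum L (fun x => Cmul (Cconj (fn n x)) (wn m x))) in *.
  replace (Csub s1 s2) with
    (Cadd (Cadd (Copp (Csub P s1)) (Copp (Csub S P))) (Cadd (Csub S Q) (Csub Q s2))) by ring.
  eapply Rle_trans; [apply Cnorm2_add4_le|]. rewrite !Cnorm2_opp.
  clearbody P Q S A1 A2. lra.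
Qed.

Lemma has_sum_finsupp a K : NoDup K -> (forall x, ~ In x K -> a x = C0) ->
  has_sum a (Csum K a).
Proof.
  intros HK Ha eps Heps. exists K. intros L HL Hi.
  rewrite (Csum_incl_support K L a); auto.
  replace (Csub (Csum K a) (Csum K a)) with C0 by ring. rewrite Cnorm2_C0; auto.
Qed.

Definition restrict K h : V -> Cplx :=
  fun x => if excluded_middle_informative (In x K) then h x else C0.

Lemma l2_restrict_approx h : l2 h -> forall eps, 0 < eps -> exists K, NoDup K /\
  l2_bound (fun x => Csub (h x) (restrict K h x)) eps.
Proof.
  intros [M HM] eps Heps.
  set (E := fun r => exists L, NoDup L /\ r = sum_norm2 L h).
  assert (Hb : bound E) by (exists M; intros r [L [HL ->]]; apply HM; auto).
  assert (Hne : exists r, E r) by (exists 0; exists []; split; [constructor|reflexivity]).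
  destruct (completeness E Hb Hne) as [s [Hs1 Hs2]].
  assert (exists K, NoDup K /\ s - eps < sum_norm2 K h) as [K [HK HKs]].
  { apply NNPP; intro Hn. assert (s <= s - eps); [|lra].
    apply Hs2. intros r [L [HL ->]]. apply Rnot_lt_le. intro Hc. apply Hn. exists L; auto. }
  exists K; split; auto.
  intros L HL.
  destruct (exists_NoDup_incl2 L K) as [L' [HL' [Hi1 Hi2]]].
  assert (S1 : sum_norm2 L' h <= s) by (apply Hs1; exists L'; auto).
  assert (E1 : sum_norm2 L' h =
               sum_norm2 K h + Rsum L' (fun x => Cnorm2 (Csub (h x) (restrict K h x)))).
  { unfold sum_norm2.
    transitivity (Rsum L' (fun x => Cnorm2 (restrict K h x) +
                                    Cnorm2 (Csub (h x) (restrict K h x)))).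
    - apply Rsum_ext_in. intros x _. unfold restrict.
      destruct (excluded_middle_informative (In x K)).
      + replace (Csub (h x) (h x)) with C0 by ring. rewrite Cnorm2_C0; ring.
      + replace (Csub (h x) C0) with (h x) by ring. rewrite Cnorm2_C0; ring.
    - rewrite Rsum_add. f_equal.
      rewrite (Rsum_incl_support K L' (fun x => Cnorm2 (restrict K h x))); auto.
      + apply Rsum_ext_in. intros x Hx. unfold restrict.
        destruct (excluded_middle_informative (In x K)); tauto.
      + intros x _ Hx. unfold restrict.
        destruct (excluded_middle_informative (In x K)); [tauto|apply Cnorm2_C0]. }
  assert (S2 : Rsum L (fun x => Cnorm2 (Csub (h x) (restrict K h x))) <=
               Rsum L' (fun x => Cnorm2 (Csub (h x) (restrict K h x)))).
  { apply Rsum_le_incl; auto. intros; apply Cnorm2_nonneg. }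
  lra.
Qed.

End SquareSummable.

Lemma Un_cv_const c : Un_cv (fun _ => c) c.
Proof.
  intros e He. exists 0%nat. intros. unfold Rdist.
  replace (c - c) with 0 by ring. rewrite Rabs_R0; lra.
Qed.

Lemma Un_cv_le_eventually (U : nat -> R) l e N :
  Un_cv U l -> (forall n, (N <= n)%nat -> U n <= e) -> l <= e.
Proof.
  intros Hc Hb. apply Rnot_lt_le. intro Hlt.
  destruct (Hc (l - e)) as [M HM]; [lra|].
  specialize (HM (N + M)%nat ltac:(lia)). specialize (Hb (N + M)%nat ltac:(lia)).
  unfold Rdist in HM. apply Rabs_def2 in HM. lra.
Qed.

Lemma Un_cv_Rsum {V : Type} (L : list V) (F : nat -> V -> R) (G : V -> R) :
  (forall x, In x L -> Un_cv (fun n => F n x) (G x)) ->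
  Un_cv (fun n => Rsum L (F n)) (Rsum L G).
Proof.
  induction L as [|y L IH]; simpl; intros H.
  - apply Un_cv_const.
  - apply CV_plus; auto.
Qed.

Lemma eventually_inv_succ_lt e : 0 < e -> exists N, forall k, (N <= k)%nat -> / (INR k + 1) < e.
Proof.
  intros He. destruct (INR_unbounded (/ e)) as [N HN]. exists N. intros k Hk.
  apply le_INR in Hk. pose proof (pos_INR N).
  apply (Rmult_lt_reg_l (INR k + 1)); [lra|]. rewrite Rinv_r by lra.
  apply (Rmult_lt_reg_l (/ e)); [apply Rinv_0_lt_compat; auto|].
  replace (/ e * ((INR k + 1) * e)) with (INR k + 1) by (field; lra). lra.
Qed.

Lemma l2_complete {V : Type} (phi : nat -> V -> Cplx) :
  (forall eps, 0 < eps -> exists N, forall k l, (N <= k)%nat -> (N <= l)%nat ->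
     l2_bound (fun x => Csub (phi k x) (phi l x)) eps) ->
  exists f, l2_conv phi f.
Proof.
  intros Hc.
  assert (Habs : forall d e, 0 < e -> d * d < e * e -> Rabs d < e)
    by (intros d e He Hd; unfold Rabs; destruct (Rcase_abs d); nra).
  assert (Hre : forall x, Cauchy_crit (fun k => re (phi k x))).
  { intros x e He. destruct (Hc (e * e / 2)) as [N HN]. { apply Rdiv_lt_0_compat; nra. }
    exists N. intros n m Hn Hm. unfold Rdist. apply Habs; auto.
    pose proof (l2_bound_point _ _ x (HN n m Hn Hm)).
    pose proof (re_sqr_le_Cnorm2 (Csub (phi n x) (phi m x))). simpl in *. nra. }
  assert (Him : forall x, Cauchy_crit (fun k => im (phi k x))).
  { intros x e He. destruct (Hc (e * e / 2)) as [N HN]. { apply Rdiv_lt_0_compat; nra. }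
    exists N. intros n m Hn Hm. unfold Rdist. apply Habs; auto.
    pose proof (l2_bound_point _ _ x (HN n m Hn Hm)).
    pose proof (im_sqr_le_Cnorm2 (Csub (phi n x) (phi m x))). simpl in *. nra. }
  set (f := fun x => mkC (proj1_sig (R_complete _ (Hre x))) (proj1_sig (R_complete _ (Him x)))).
  assert (Cre : forall x, Un_cv (fun k => re (phi k x)) (re (f x)))
    by (intros x; apply (proj2_sig (R_complete _ (Hre x)))).
  assert (Cim : forall x, Un_cv (fun k => im (phi k x)) (im (f x)))
    by (intros x; apply (proj2_sig (R_complete _ (Him x)))).
  exists f. intros e He. destruct (Hc e He) as [N HN]. exists N. intros k Hk L HL.
  apply (Un_cv_le_eventually (fun l => Rsum L (fun x => Cnorm2 (Csub (phi k x) (phi l x)))) _ e N).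
  - apply Un_cv_Rsum. intros x _. unfold Cnorm2, Csub, Cadd, Copp; simpl.
    apply CV_plus; apply CV_mult; apply CV_plus; try apply Un_cv_const;
      try (apply (CV_mult (fun _ => -1) _ (-1)); [apply Un_cv_const|]);
      try (apply CV_opp); auto.
  - intros l Hl. apply (HN k l Hk Hl L HL).
Qed.

(** * The leveled tree *)

Section Tree.
Variables (V : Type) (par : V -> V) (lev : V -> nat) (ch : V -> list V).
Hypothesis Htree : leveled_tree par lev ch.
Implicit Types (f g u w a : V -> Cplx) (L K : list V) (x y : V).

Local Notation dec := excluded_middle_informative.

Lemma lev_par x : lev (par x) = S (lev x).
Proof. apply Htree. Qed.

Lemma ch_NoDup x : NoDup (ch x).
Proof. apply Htree. Qed.

Lemma In_ch x y : In y (ch x) <-> par y = x.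
Proof. apply Htree. Qed.

Lemma common_iterate x y : exists m n, Nat.iter m par x = Nat.iter n par y.
Proof. apply Htree. Qed.

Lemma lev_iter m x : lev (Nat.iter m par x) = (m + lev x)%nat.
Proof. induction m; simpl; auto. rewrite lev_par, IHm; auto. Qed.

Lemma par_neq x : par x <> x.
Proof. intro H. pose proof (lev_par x). rewrite H in H0. lia. Qed.

(* [desc y x]: y is x or an ancestor of x *)
Definition desc y x : Prop := exists m, Nat.iter m par x = y.

Lemma desc_refl y : desc y y.
Proof. exists 0%nat; auto. Qed.

Lemma desc_lev y x : desc y x -> (lev x <= lev y)%nat.
Proof. intros [m <-]. rewrite lev_iter. lia. Qed.

Lemma desc_lev_eq y x : desc y x -> lev x = lev y -> x = y.
Proof.
  intros [m Hm] He. destruct m; simpl in *; auto.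
  subst y. rewrite lev_par, lev_iter in He. lia.
Qed.

Lemma not_desc_par y : ~ desc y (par y).
Proof. intros H. apply desc_lev in H. rewrite lev_par in H. lia. Qed.

Lemma desc_par y x : desc y x -> x <> y -> desc y (par x).
Proof.
  intros [m Hm] Hne. destruct m; simpl in *; [contradiction|].
  exists m. rewrite <- Nat.iter_succ_r. simpl. auto.
Qed.

Lemma desc_of_desc_par y x : desc y (par x) -> desc y x.
Proof. intros [m Hm]. exists (S m). rewrite Nat.iter_succ_r. auto. Qed.

Lemma desc_iter y x m : desc y x -> desc (Nat.iter m par y) x.
Proof. intros [n Hn]. exists (m + n)%nat. rewrite Nat.iter_add, Hn; auto. Qed.

Lemma desc_top y c : desc y c -> ~ desc y (par c) -> c = y.
Proof. intros H1 H2. apply NNPP; intro Hn. apply H2, desc_par; auto. Qed.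

Lemma subtree_cover_lev n : forall y, lev y = n -> exists T, forall x, desc y x -> In x T.
Proof.
  induction n as [|n IH]; intros y Hy.
  - exists [y]. intros x Hx. left. apply desc_lev_eq in Hx; auto.
    pose proof (desc_lev _ _ Hx). lia.
  - assert (Hc : forall l, incl l (ch y) -> exists T, forall c x, In c l -> desc c x -> In x T).
    { induction l as [|c l IHl]; intros Hi.
      - exists []. intros c x [].
      - destruct IHl as [T1 HT1]. { intros w Hw; apply Hi; right; auto. }
        assert (Hcy : par c = y) by (apply In_ch, Hi; left; auto).
        destruct (IH c) as [T2 HT2]. { rewrite <- Hcy, lev_par in Hy. lia. }
        exists (T2 ++ T1). intros c' x [<-|Hc'] Hd; apply in_or_app; eauto. }
    destruct (Hc (ch y) (incl_refl _)) as [T HT].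
    exists (y :: T). intros x [m Hm]. destruct m as [|m].
    + left; auto.
    + right. apply (HT (Nat.iter m par x)).
      * apply In_ch. rewrite <- Nat.iter_succ. auto.
      * exists m; auto.
Qed.

Lemma subtree_list y : exists T, NoDup T /\ forall x, In x T <-> desc y x.
Proof.
  destruct (subtree_cover_lev (lev y) y eq_refl) as [T0 HT0].
  destruct (exists_NoDup_filter (desc y) T0) as [T [HT HiT]].
  exists T; split; auto. intros x; rewrite HiT; split; [tauto|]. intros; split; auto.
Qed.

Lemma common_ancestor x L : exists N, forall t, In t L -> desc (Nat.iter N par x) t.
Proof.
  induction L as [|t L [N1 HN1]].
  - exists 0%nat. intros t [].
  - destruct (common_iterate x t) as [m [n Hmn]].
    exists (N1 + m)%nat. intros s [<-|Hs].
    + rewrite Nat.iter_add. apply desc_iter. exists n; auto.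
    + rewrite Nat.add_comm, Nat.iter_add. apply desc_iter. auto.
Qed.

Definition delta y : V -> Cplx := fun x => if dec (x = y) then Cone else C0.

Definition chi y g : V -> Cplx := fun x => if dec (desc y x) then g x else C0.

Lemma delta_same y : delta y y = Cone.
Proof. unfold delta; destruct (dec (y = y)); tauto. Qed.

Lemma delta_other y x : x <> y -> delta y x = C0.
Proof. unfold delta; destruct (dec (x = y)); tauto. Qed.

Lemma delta_finsupp x : finsupp (delta x).
Proof. exists [x]. intros y Hy. apply delta_other. intro; subst; apply Hy; left; auto. Qed.

Lemma Csum_delta_mul y k L : NoDup L -> In y L ->
  Csum L (fun x => Cmul (delta y x) (k x)) = k y.
Proof.
  intros HL Hy. rewrite (Csum_eq_single L _ y HL Hy).
  - rewrite delta_same; ring.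
  - intros x _ Hx. rewrite delta_other; auto; ring.
Qed.

Lemma Csum_mul_delta f K x : NoDup K -> (forall y, ~ In y K -> f y = C0) ->
  Csum K (fun y => Cmul (f y) (delta y x)) = f x.
Proof.
  intros HK Hf. destruct (classic (In x K)) as [Hx|Hx].
  - rewrite (Csum_eq_single K _ x HK Hx). + rewrite delta_same; ring.
    + intros y _ Hy. rewrite delta_other; [ring|auto].
  - rewrite Hf; auto. apply Csum_eq0. intros y Hy. rewrite delta_other; [ring|].
    intro; subst; contradiction.
Qed.

Lemma chi_support y g T : (forall x, In x T <-> desc y x) ->
  forall x, ~ In x T -> chi y g x = C0.
Proof.
  intros HT x Hx. unfold chi. destruct (dec (desc y x)); auto.
  exfalso; apply Hx, HT; auto.
Qed.

Lemma chi_finsupp y g : finsupp (chi y g).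
Proof.
  destruct (subtree_list y) as [T [HT HiT]]. exists T. apply (chi_support y g T HiT).
Qed.

Lemma Csum_chi_mul y h k T L : NoDup T -> (forall x, In x T <-> desc y x) ->
  NoDup L -> incl T L ->
  Csum L (fun x => Cmul (chi y h x) (k x)) = Csum T (fun x => Cmul (h x) (k x)).
Proof.
  intros HT HiT HL Hi. rewrite (Csum_incl_support T L); auto.
  - apply Csum_ext_in. intros x Hx. unfold chi. destruct (dec (desc y x)); auto.
    exfalso; apply n, HiT; auto.
  - intros x _ Hx. rewrite (chi_support y h T HiT x Hx). ring.
Qed.

Definition nbhd y : list V := par y :: y :: ch y.

Lemma nbhd_NoDup y : NoDup (nbhd y).
Proof.
  unfold nbhd. constructor; [|constructor].
  - intros [H|H]. + apply (par_neq y); auto.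
    + apply In_ch in H. pose proof (lev_par (par y)). pose proof (lev_par y).
      rewrite H in H0. lia.
  - intros H. apply In_ch in H. apply (par_neq y); auto.
  - apply ch_NoDup.
Qed.

Definition nbhds K : list V := flat_map nbhd K.

Lemma nbhd_incl_nbhds K y : In y K -> incl (nbhd y) (nbhds K).
Proof. intros Hy z Hz. unfold nbhds. apply in_flat_map. eauto. Qed.

Lemma incl_nbhds K : incl K (nbhds K).
Proof. intros y Hy. apply (nbhd_incl_nbhds K y Hy). right; left; auto. Qed.

(** * The Jacobi matrix *)

Section Jacobi.
Variables lam beta : V -> R.

Local Notation J := (Japply par ch lam beta).
Local Notation T := (J_fin par ch lam beta).

Lemma Japply_ext f g x : (forall y, f y = g y) -> J f x = J g x.
Proof.
  intros H. unfold Japply. rewrite !H. f_equal.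
  apply Csum_ext_in. intros; rewrite H; auto.
Qed.

Lemma Japply_add f g x : J (fun y => Cadd (f y) (g y)) x = Cadd (J f x) (J g x).
Proof.
  unfold Japply.
  rewrite (Csum_ext_in (ch x) _
    (fun y => Cadd (Cmul (RtoC (lam y)) (f y)) (Cmul (RtoC (lam y)) (g y)))).
  - rewrite Csum_add. ring.
  - intros; ring.
Qed.

Lemma Japply_sub f g x : J (fun y => Csub (f y) (g y)) x = Csub (J f x) (J g x).
Proof.
  unfold Japply.
  rewrite (Csum_ext_in (ch x) _
    (fun y => Csub (Cmul (RtoC (lam y)) (f y)) (Cmul (RtoC (lam y)) (g y)))).
  - rewrite Csum_sub. ring.
  - intros; ring.
Qed.

Lemma Japply_scale c f x : J (fun y => Cmul c (f y)) x = Cmul c (J f x).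
Proof.
  unfold Japply.
  rewrite (Csum_ext_in (ch x) _ (fun y => Cmul c (Cmul (RtoC (lam y)) (f y)))).
  - rewrite Csum_mull. ring.
  - intros; ring.
Qed.

Lemma Japply_zero x : J (fun _ => C0) x = C0.
Proof. unfold Japply. rewrite Csum_eq0. - ring. - intros; ring. Qed.

Lemma Japply_conj f x : J (fun y => Cconj (f y)) x = Cconj (J f x).
Proof.
  unfold Japply. rewrite !Cconj_add, !Cconj_mul, !Cconj_RtoC, <- Csum_conj.
  f_equal. apply Csum_ext_in. intros. rewrite Cconj_mul, Cconj_RtoC; auto.
Qed.

Lemma Japply_Csum {W : Type} (K : list W) (F : W -> V -> Cplx) x :
  J (fun y => Csum K (fun k => F k y)) x = Csum K (fun k => J (F k) x).
Proof.
  induction K as [|k K IH]; simpl.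
  - apply Japply_zero.
  - rewrite Japply_add, IH. reflexivity.
Qed.

(* Cutting g to a subtree only creates boundary terms at its top y and at par y. *)
Lemma Japply_chi y g x :
  J (chi y g) x =
  Cadd (Csub (chi y (J g) x) (Cmul (delta y x) (Cmul (RtoC (lam y)) (g (par y)))))
       (Cmul (delta (par y) x) (Cmul (RtoC (lam y)) (g y))).
Proof.
  unfold Japply, chi.
  destruct (dec (desc y x)) as [Hd|Hd].
  - assert (Hx : x <> par y) by (intro; subst; apply (not_desc_par y); auto).
    rewrite (delta_other (par y) x Hx).
    assert (Hcs : Csum (ch x) (fun c => Cmul (RtoC (lam c)) (if dec (desc y c) then g c else C0))
                  = Csum (ch x) (fun c => Cmul (RtoC (lam c)) (g c))).
    { apply Csum_ext_in. intros c Hc. apply In_ch in Hc. subst x.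
      destruct (dec (desc y c)); auto. exfalso; apply n, desc_of_desc_par; auto. }
    rewrite Hcs.
    destruct (classic (x = y)) as [->|Hne].
    + rewrite delta_same. destruct (dec (desc y (par y))) as [Hp|Hp].
      * exfalso; apply (not_desc_par y); auto.
      * ring.
    + rewrite (delta_other y x Hne). destruct (dec (desc y (par x))) as [Hp|Hp].
      * ring.
      * exfalso; apply Hp, desc_par; auto.
  - assert (Hxy : x <> y) by (intro; subst; apply Hd, desc_refl).
    rewrite (delta_other y x Hxy).
    destruct (dec (desc y (par x))) as [Hp|Hp].
    { exfalso; apply Hd, desc_of_desc_par; auto. }
    destruct (classic (x = par y)) as [->|Hne].
    + rewrite delta_same, (Csum_eq_single (ch (par y)) _ y (ch_NoDup _)).
      * destruct (dec (desc y y)) as [_|Hn]; [ring|exfalso; apply Hn, desc_refl].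
      * apply In_ch; auto.
      * intros c Hc Hcy. destruct (dec (desc y c)) as [Hdc|Hdc]; [|ring].
        apply In_ch in Hc. exfalso. apply Hcy. apply desc_top; auto.
        rewrite Hc. apply not_desc_par.
    + rewrite (delta_other (par y) x Hne), Csum_eq0. * ring.
      * intros c Hc. destruct (dec (desc y c)) as [Hdc|Hdc]; [|ring].
        apply In_ch in Hc. exfalso. apply Hne. rewrite <- Hc. f_equal.
        apply desc_top; auto. rewrite Hc. auto.
Qed.

Lemma Japply_delta y x :
  J (delta y) x =
  Cadd (Cadd (Cmul (delta (par y) x) (RtoC (lam y))) (Cmul (delta y x) (RtoC (beta y))))
       (if dec (par x = y) then RtoC (lam x) else C0).
Proof.
  unfold Japply.
  assert (E1 : Cmul (RtoC (lam x)) (delta y (par x)) =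
               if dec (par x = y) then RtoC (lam x) else C0).
  { unfold delta. destruct (dec (par x = y)); ring. }
  assert (E2 : Cmul (RtoC (beta x)) (delta y x) = Cmul (delta y x) (RtoC (beta y))).
  { unfold delta. destruct (dec (x = y)); [subst|]; ring. }
  assert (E3 : Csum (ch x) (fun c => Cmul (RtoC (lam c)) (delta y c)) =
               Cmul (delta (par y) x) (RtoC (lam y))).
  { destruct (classic (x = par y)) as [->|Hne].
    - rewrite delta_same, (Csum_eq_single _ _ y (ch_NoDup _)).
      + rewrite delta_same; ring.
      + apply In_ch; auto.
      + intros c _ Hc. rewrite delta_other; auto; ring.
    - rewrite delta_other, Csum_eq0; auto. + ring.
      + intros c Hc. apply In_ch in Hc. rewrite delta_other. * ring.
        * intro; subst; apply Hne; auto. }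
  rewrite E1, E2, E3. ring.
Qed.

Lemma Japply_delta_notin_nbhd x y : ~ In y (nbhd x) -> J (delta x) y = C0.
Proof.
  intros Hy. rewrite Japply_delta, !delta_other.
  - destruct (dec (par y = x)) as [Hp|Hp].
    + exfalso. apply Hy. right; right. apply In_ch; auto.
    + ring.
  - intro; subst; apply Hy; right; left; auto.
  - intro; subst; apply Hy; left; auto.
Qed.

Lemma Japply_delta_real x y : Cconj (J (delta x) y) = J (delta x) y.
Proof.
  rewrite <- Japply_conj. apply Japply_ext. intros s.
  unfold delta. destruct (dec (s = x)); [apply Cconj_Cone|apply Cconj_C0].
Qed.

Lemma Csum_Japply_delta y g L : NoDup L -> incl (nbhd y) L ->
  Csum L (fun x => Cmul (J (delta y) x) (g x)) = J g y.
Proof.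
  intros HL Hi.
  rewrite (Csum_ext_in L _
    (fun x => Cadd (Cadd (Cmul (delta (par y) x) (Cmul (RtoC (lam y)) (g (par y))))
                         (Cmul (delta y x) (Cmul (RtoC (beta y)) (g y))))
                   (Cmul (if dec (par x = y) then RtoC (lam x) else C0) (g x)))).
  2:{ intros x _. rewrite Japply_delta.
      unfold delta. destruct (dec (x = par y)) as [e1|e1]; destruct (dec (x = y)) as [e2|e2].
      - exfalso. apply (par_neq y). congruence.
      - rewrite e1. ring.
      - rewrite e2. ring.
      - ring. }
  assert (Hpy : In (par y) L) by (apply Hi; left; auto).
  assert (Hy : In y L) by (apply Hi; right; left; auto).
  rewrite !Csum_add, !Csum_delta_mul by auto.
  rewrite (Csum_incl_support (ch y) L); auto.
  - unfold Japply. f_equal.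
    apply Csum_ext_in. intros c Hc. destruct (dec (par c = y)); [auto|].
    exfalso; apply n, In_ch; auto.
  - apply ch_NoDup.
  - intros c Hc. apply Hi. right; right; auto.
  - intros x _ Hx. destruct (dec (par x = y)); [|ring].
    exfalso; apply Hx, In_ch; auto.
Qed.

(* J is a real symmetric matrix: the bilinear (not sesquilinear) form is symmetric. *)
Lemma Japply_symmetric f g K L : NoDup K -> (forall x, ~ In x K -> f x = C0) ->
  NoDup L -> incl (nbhds K) L ->
  Csum L (fun x => Cmul (J f x) (g x)) = Csum L (fun x => Cmul (f x) (J g x)).
Proof.
  intros HK Hf HL Hi.
  assert (EJ : forall x, J f x = Csum K (fun y => Cmul (f y) (J (delta y) x))).
  { intros x. rewrite (Japply_ext f (fun x => Csum K (fun y => Cmul (f y) (delta y x)))).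
    - rewrite Japply_Csum. apply Csum_ext_in. intros; apply Japply_scale.
    - intros; symmetry; apply Csum_mul_delta; auto. }
  rewrite (Csum_ext_in L _ (fun x => Csum K (fun y => Cmul (f y) (Cmul (J (delta y) x) (g x))))).
  2:{ intros x _. rewrite EJ, <- Csum_mulr. apply Csum_ext_in. intros; ring. }
  rewrite (Csum_comm L K (fun x y => Cmul (f y) (Cmul (J (delta y) x) (g x)))).
  rewrite (Csum_ext_in K _ (fun y => Cmul (f y) (J g y))).
  2:{ intros y Hy. rewrite Csum_mull. f_equal. apply Csum_Japply_delta; auto.
      intros z Hz. apply Hi, (nbhd_incl_nbhds K y Hy); auto. }
  symmetry. apply Csum_incl_support; auto.
  - intros z Hz; apply Hi, incl_nbhds; auto.
  - intros x _ Hx. rewrite Hf; auto. ring.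
Qed.

Lemma Japply_symmetric_conj f g K L : NoDup K -> (forall x, ~ In x K -> f x = C0) ->
  NoDup L -> incl (nbhds K) L ->
  Csum L (fun x => Cmul (Cconj (J f x)) (g x)) = Csum L (fun x => Cmul (Cconj (f x)) (J g x)).
Proof.
  intros HK Hf HL Hi.
  rewrite <- (Japply_symmetric (fun x => Cconj (f x)) g K L); auto.
  - apply Csum_ext_in. intros; rewrite Japply_conj; auto.
  - intros x Hx; rewrite Hf; auto; apply Cconj_C0.
Qed.

Lemma Japply_finsupp f : finsupp f -> finsupp (J f).
Proof.
  intros Hf. destruct (finsupp_NoDup f Hf) as [K [HK Hz0]].
  exists (nbhds K). intros x Hx. unfold Japply.
  rewrite (Hz0 x), (Hz0 (par x)), Csum_eq0.
  - apply Cplx_eq; simpl; ring.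
  - intros c Hc. rewrite Hz0. + apply Cplx_eq; simpl; ring.
    + intro Hck. apply Hx, (nbhd_incl_nbhds K c Hck). left. apply In_ch; auto.
  - intro Hk. apply Hx, (nbhd_incl_nbhds K (par x) Hk). right; right. apply In_ch; auto.
  - intro Hk. apply Hx, incl_nbhds; auto.
Qed.

Lemma closure_l2 u w : closure T u w -> l2 u /\ l2 w.
Proof.
  intros [fn [gn [HT [Hf Hg]]]]. split.
  - apply (l2_conv_l2 fn); auto. intros n. apply finsupp_l2, HT.
  - apply (l2_conv_l2 gn); auto. intros n. destruct (HT n) as [Hfn Hgn].
    destruct (Japply_finsupp _ Hfn) as [K HK].
    apply finsupp_l2. exists K. intros x Hx. rewrite Hgn; auto.
Qed.

Lemma closure_sub_adjoint u w : closure T u w -> adjoint (closure T) u w.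
Proof.
  intros Huw. pose proof (closure_l2 _ _ Huw) as [Hu Hw].
  split; [auto|split; [auto|]]. intros f g Hfg.
  pose proof (closure_l2 _ _ Hfg) as [Hf Hg].
  destruct Huw as [un [wn [HTu [Cu Cw]]]]. destruct Hfg as [fn [gn [HTf [Cf Cg]]]].
  apply (inner_eq_of_approx f g u w fn gn un wn); auto.
  intros n m. destruct (HTf n) as [Hfn Hgn]. destruct (HTu m) as [Hun Hwn].
  destruct (finsupp_NoDup _ Hfn) as [K [HK HKz]].
  exists (nbhds K). intros L HL Hi.
  rewrite (Csum_ext_in L _ (fun x => Cmul (Cconj (J (fn n) x)) (un m x)))
    by (intros; rewrite Hgn; auto).
  rewrite (Japply_symmetric_conj (fn n) (un m) K L HK HKz HL Hi).
  apply Csum_ext_in. intros; rewrite Hwn; auto.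
Qed.

(* testing against delta x shows that the adjoint acts as the matrix J *)
Lemma adjoint_Japply u w : adjoint (closure T) u w -> forall x, w x = J u x.
Proof.
  intros [Hu [Hw Had]] x.
  assert (Hcl : closure T (delta x) (J (delta x))).
  { exists (fun _ => delta x), (fun _ => J (delta x)). split; [|split; apply l2_conv_const].
    intros n. split; [apply delta_finsupp|auto]. }
  symmetry. apply (Had _ _ Hcl).
  - unfold inner.
    assert (E : Csum (nbhd x) (fun y => Cmul (Cconj (J (delta x) y)) (u y)) = J u x).
    { rewrite (Csum_ext_in _ _ (fun y => Cmul (J (delta x) y) (u y))).
      - apply Csum_Japply_delta; [apply nbhd_NoDup|apply incl_refl].
      - intros; rewrite Japply_delta_real; auto. }
    rewrite <- E. apply has_sum_finsupp; [apply nbhd_NoDup|].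
    intros y Hy. rewrite Japply_delta_notin_nbhd, Cconj_C0; auto. ring.
  - unfold inner.
    assert (E : Csum [x] (fun y => Cmul (Cconj (delta x y)) (w y)) = w x).
    { simpl. rewrite delta_same, Cconj_Cone. ring. }
    rewrite <- E. apply has_sum_finsupp; [constructor; [simpl; tauto|constructor]|].
    intros y Hy. rewrite delta_other, Cconj_C0. + ring.
    + intro; subst; apply Hy; left; auto.
Qed.

(** * The energy estimate for nonreal z *)

Section NonrealSpectralParameter.
Variable z : Cplx.
Hypothesis Hz : im z <> 0.

Definition Jz f x : Cplx := Csub (J f x) (Cmul z (f x)).

Lemma Jz_add f g x : Jz (fun y => Cadd (f y) (g y)) x = Cadd (Jz f x) (Jz g x).
Proof. unfold Jz. rewrite Japply_add. ring. Qed.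

Lemma Jz_sub f g x : Jz (fun y => Csub (f y) (g y)) x = Csub (Jz f x) (Jz g x).
Proof. unfold Jz. rewrite Japply_sub. ring. Qed.

Lemma Jz_scale c f x : Jz (fun y => Cmul c (f y)) x = Cmul c (Jz f x).
Proof. unfold Jz. rewrite Japply_scale. ring. Qed.

Lemma Jz_zero x : Jz (fun _ => C0) x = C0.
Proof. unfold Jz. rewrite Japply_zero. ring. Qed.

Lemma Jz_chi y g x :
  Jz (chi y g) x =
  Cadd (Csub (chi y (Jz g) x) (Cmul (delta y x) (Cmul (RtoC (lam y)) (g (par y)))))
       (Cmul (delta (par y) x) (Cmul (RtoC (lam y)) (g y))).
Proof. unfold Jz. rewrite Japply_chi. unfold chi. destruct (dec (desc y x)); ring. Qed.

(* Sum Phi-bar J Phi is real, so Im (sum Phi-bar Jz Phi) = - im z ||Phi||^2;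
   Cauchy-Schwarz then gives |im z| ||Phi|| <= ||Jz Phi||. *)
Lemma energy_estimate Phi B : finsupp Phi -> l2_bound (Jz Phi) B ->
  l2_bound Phi (B / (im z * im z)).
Proof.
  intros Hf HB.
  destruct (finsupp_NoDup Phi Hf) as [K [HK HKz]].
  destruct (exists_NoDup_cover (nbhds K)) as [L [HL HiL]].
  assert (Hi : incl (nbhds K) L) by (intros t Ht; apply HiL; auto).
  assert (HKL : incl K L) by (intros t Ht; apply Hi, incl_nbhds; auto).
  set (P := sum_norm2 L Phi).
  assert (HPb : l2_bound Phi P).
  { eapply l2_bound_mono; [|apply (finsupp_l2_bound Phi K HK HKz)].
    unfold P, sum_norm2. apply Req_le. symmetry. apply Rsum_incl_support; auto.
    intros x _ Hx; rewrite HKz; auto; apply Cnorm2_C0. }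
  set (S0 := Csum L (fun x => Cmul (Cconj (Phi x)) (J Phi x))).
  assert (Him0 : im S0 = 0).
  { assert (HC : Cconj S0 = S0).
    { unfold S0. rewrite <- Csum_conj.
      rewrite (Csum_ext_in L _ (fun x => Cmul (Cconj (J Phi x)) (Phi x)))
        by (intros; rewrite Cconj_mul, Cconj_involutive; ring).
      apply (Japply_symmetric_conj Phi Phi K L HK HKz HL Hi). }
    assert (h := f_equal im HC); simpl in h; lra. }
  set (S1 := Csum L (fun x => Cmul (Cconj (Phi x)) (Jz Phi x))).
  assert (HimS1 : im S1 = - (im z * P)).
  { assert (E1 : S1 = Csub S0 (Cmul z (RtoC P))).
    { unfold S1, S0, P, sum_norm2. rewrite <- Csum_RtoC, <- Csum_mull, <- Csum_sub.
      apply Csum_ext_in. intros. unfold Jz. rewrite <- Cmul_conj_l. ring. }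
    rewrite E1; simpl; lra. }
  assert (HCS : Cnorm2 S1 <= P * B) by (apply Csum_conj_mul_le; auto).
  pose proof (im_sqr_le_Cnorm2 S1) as Hn. rewrite HimS1 in Hn.
  assert (HP0 : 0 <= P) by apply sum_norm2_nonneg.
  pose proof (im_sqr_pos z Hz) as Hz2.
  eapply l2_bound_mono; [|exact HPb].
  apply (Rmult_le_reg_r (im z * im z)); auto.
  replace (B / (im z * im z) * (im z * im z)) with B by (field; lra).
  destruct HP0 as [HP0|<-]; [|pose proof (l2_bound_nonneg _ _ HB); lra].
  apply (Rmult_le_reg_l P); auto. nra.
Qed.

Lemma closure_no_eigenvector u : closure T u (fun x => Cmul z (u x)) -> forall x, u x = C0.
Proof.
  intros [fn [gn [HTf [Cf Cg]]]] x0. apply Cnorm2_le_all_eq0. intros e He.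
  set (z2 := Cnorm2 z). assert (Hz2 : 0 <= z2) by apply Cnorm2_nonneg.
  pose proof (im_sqr_pos z Hz) as Hiz.
  set (d := Rmin (e / 4 * (im z * im z) / (2 + 2 * z2 + 1)) (e / 4)).
  assert (Hd : 0 < d).
  { apply Rmin_glb_lt; [apply Rdiv_lt_0_compat|]; nra. }
  destruct (Cf d Hd) as [N1 HN1]. destruct (Cg d Hd) as [N2 HN2].
  set (n := (N1 + N2)%nat).
  specialize (HN1 n ltac:(unfold n; lia)). specialize (HN2 n ltac:(unfold n; lia)).
  destruct (HTf n) as [Hfn Hgn].
  assert (HJ : l2_bound (Jz (fn n)) (2 * d + 2 * (z2 * d))).
  { eapply l2_bound_ext; [|apply (l2_bound_sub _ _ _ _ HN2 (l2_bound_scale z _ _ HN1))].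
    intros x. unfold Jz. rewrite <- Hgn. ring. }
  pose proof (l2_bound_point _ _ x0 (energy_estimate _ _ Hfn HJ)).
  pose proof (l2_bound_point _ _ x0 HN1).
  pose proof (Cnorm2_sub_le (fn n x0) (Csub (fn n x0) (u x0))) as Htri.
  replace (Csub (fn n x0) (Csub (fn n x0) (u x0))) with (u x0) in Htri by ring.
  assert (Hdd : d <= e / 4 * (im z * im z) / (2 + 2 * z2 + 1)) by apply Rmin_l.
  assert (Hde : d <= e / 4) by apply Rmin_r.
  assert ((2 * d + 2 * (z2 * d)) / (im z * im z) <= e / 4).
  { apply (Rmult_le_reg_r (im z * im z)); auto.
    replace ((2 * d + 2 * (z2 * d)) / (im z * im z) * (im z * im z))
      with (2 * d + 2 * (z2 * d)) by (field; lra).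
    apply (Rmult_le_compat_r (2 + 2 * z2 + 1)) in Hdd; [|lra].
    replace (e / 4 * (im z * im z) / (2 + 2 * z2 + 1) * (2 + 2 * z2 + 1))
      with (e / 4 * (im z * im z)) in Hdd by (field; lra).
    nra. }
  lra.
Qed.

(* Jz is continuous at each vertex, since it only involves the finitely many neighbours. *)
Lemma Jz_point_bound x : exists A, 0 <= A /\
  forall d e, l2_bound d e -> Cnorm2 (Jz d x) <= A * e.
Proof.
  set (R0 := Rsum (nbhd x) (fun y => Cnorm2 (J (delta x) y))).
  assert (HR0 : 0 <= R0) by (apply Rsum_nonneg; intros; apply Cnorm2_nonneg).
  exists (2 * R0 + 2 * Cnorm2 z). split; [pose proof (Cnorm2_nonneg z); lra|].
  intros d e Hd.
  unfold Jz. eapply Rle_trans; [apply Cnorm2_sub_le|].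
  rewrite <- (Csum_Japply_delta x d (nbhd x)); [|apply nbhd_NoDup|apply incl_refl].
  pose proof (Cauchy_Schwarz_Csum (nbhd x) (J (delta x)) d) as H1. fold R0 in H1.
  pose proof (Hd _ (nbhd_NoDup x)) as H2.
  pose proof (l2_bound_point _ _ x Hd) as H3.
  rewrite Cnorm2_mul.
  assert (Rsum (nbhd x) (fun y => Cnorm2 (d y)) * R0 <= e * R0)
    by (apply Rmult_le_compat_r; auto).
  pose proof (Cnorm2_nonneg z). pose proof (Cnorm2_nonneg (d x)).
  nra.
Qed.

Lemma Jz_pointwise_limit phi f h : l2_conv phi f -> l2_conv (fun k => Jz (phi k)) h ->
  forall x, Jz f x = h x.
Proof.
  intros Cf Ch x. apply Csub_eq0, Cnorm2_le_all_eq0. intros e He.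
  destruct (Jz_point_bound x) as [A [HA HAb]].
  destruct (Cf (e / (4 * (A + 1)))) as [N1 HN1]. { apply Rdiv_lt_0_compat; lra. }
  destruct (Ch (e / 4)) as [N2 HN2]; [lra|].
  set (k := (N1 + N2)%nat).
  specialize (HN1 k ltac:(unfold k; lia)). specialize (HN2 k ltac:(unfold k; lia)).
  pose proof (HAb _ _ HN1) as H1.
  pose proof (l2_bound_point _ _ x HN2) as H2. simpl in H2.
  replace (Csub (Jz f x) (h x)) with
    (Csub (Csub (Jz (phi k) x) (h x)) (Jz (fun s => Csub (phi k s) (f s)) x))
    by (rewrite Jz_sub; ring).
  eapply Rle_trans; [apply Cnorm2_sub_le|].
  assert (A * (e / (4 * (A + 1))) <= e / 4).
  { apply (Rmult_le_reg_r (4 * (A + 1))); [lra|].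
    replace (A * (e / (4 * (A + 1))) * (4 * (A + 1))) with (A * e) by (field; lra). nra. }
  lra.
Qed.

Lemma Jz_approx_converges phi h : (forall k, finsupp (phi k)) ->
  l2_conv (fun k => Jz (phi k)) h ->
  exists f, l2_conv phi f /\ forall x, Jz f x = h x.
Proof.
  intros Hphi Ch.
  assert (Hc : forall e, 0 < e -> exists N, forall k l, (N <= k)%nat -> (N <= l)%nat ->
                 l2_bound (fun x => Csub (phi k x) (phi l x)) e).
  { intros e He. pose proof (im_sqr_pos z Hz) as Hiz.
    destruct (l2_conv_Cauchy _ _ Ch (e * (im z * im z))) as [N HN]; [nra|].
    exists N. intros k l Hk Hl.
    replace e with (e * (im z * im z) / (im z * im z)) by (field; lra).
    apply energy_estimate; [apply finsupp_sub; auto|].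
    eapply l2_bound_ext; [|apply (HN k l Hk Hl)]. intros x. rewrite Jz_sub. auto. }
  destruct (l2_complete phi Hc) as [f Cf].
  exists f. split; auto. apply (Jz_pointwise_limit phi); auto.
Qed.

(** * The eigenfunction v *)

Section Eigenfunction.
Hypothesis Hlam : forall x, 0 < lam x.
Variable v : V -> Cplx.
Hypothesis Hv0 : exists x, v x <> C0.
Hypothesis Hv : forall x, J v x = Cmul z (v x).

Lemma Jz_eigenfunction x : Jz v x = C0.
Proof. unfold Jz. rewrite Hv. ring. Qed.

Lemma lam_neq0 y : RtoC (lam y) <> C0.
Proof. apply RtoC_neq0. pose proof (Hlam y); lra. Qed.

(* The bulk terms of sum_T (v-bar J v - v J v-bar) cancel by symmetry of J,
   leaving only the edge (y, par y). *)
Lemma Green_identity y T : NoDup T -> (forall x, In x T <-> desc y x) ->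
  Cmul (Csub z (Cconj z)) (RtoC (sum_norm2 T v)) =
  Cmul (RtoC (lam y)) (Csub (Cmul (Cconj (v y)) (v (par y))) (Cmul (Cconj (v (par y))) (v y))).
Proof.
  intros HT HiT.
  destruct (exists_NoDup_cover (nbhds T)) as [L [HL HiL]].
  assert (Hi : incl (nbhds T) L) by (intros t Ht; apply HiL; auto).
  assert (HyT : In y T) by (apply HiT, desc_refl).
  assert (HTL : incl T L) by (intros t Ht; apply Hi, incl_nbhds; auto).
  assert (HyL : In y L) by auto.
  assert (HpL : In (par y) L) by (apply Hi, (nbhd_incl_nbhds T y HyT); left; auto).
  pose proof (Japply_symmetric (chi y (fun x => Cconj (v x))) v T L HT
    (chi_support y _ T HiT) HL Hi) as HS.
  rewrite (Csum_ext_in L (fun x => Cmul (J (chi y (fun x0 => Cconj (v x0))) x) (v x))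
     (fun x => Cadd (Cadd (Cmul (chi y (fun t => Cmul (Cconj z) (Cconj (v t))) x) (v x))
                          (Copp (Cmul (delta y x) (Cmul (Cmul (RtoC (lam y)) (Cconj (v (par y)))) (v x)))))
                    (Cmul (delta (par y) x) (Cmul (Cmul (RtoC (lam y)) (Cconj (v y))) (v x))))) in HS.
  2:{ intros x _. rewrite Japply_chi. unfold chi. destruct (dec (desc y x)).
      - rewrite Japply_conj, Hv, Cconj_mul. ring.
      - ring. }
  rewrite !Csum_add, Csum_opp, (Csum_chi_mul y _ _ T L HT HiT HL HTL) in HS.
  rewrite (Csum_delta_mul y _ L HL HyL), (Csum_delta_mul (par y) _ L HL HpL) in HS.
  rewrite (Csum_ext_in L _ (fun x => Cmul (chi y (fun t => Cconj (v t)) x) (Cmul z (v x)))) in HS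
    by (intros; rewrite Hv; auto).
  rewrite (Csum_chi_mul y _ _ T L HT HiT HL HTL) in HS.
  rewrite (Csum_ext_in T _ (fun x => Cmul (Cconj z) (RtoC (Cnorm2 (v x))))) in HS
    by (intros; rewrite <- Cmul_conj_l; ring).
  rewrite (Csum_ext_in T (fun x => Cmul (Cconj (v x)) (Cmul z (v x)))
                         (fun x => Cmul z (RtoC (Cnorm2 (v x))))) in HS
    by (intros; rewrite <- Cmul_conj_l; ring).
  rewrite !Csum_mull, Csum_RtoC in HS. fold (sum_norm2 T v) in HS.
  apply Csub_eq0.
  match type of HS with ?l = ?r => transitivity (Csub r l); [ring|rewrite HS; ring] end.
Qed.

Lemma eigenfunction_zero_subtree y : v y = C0 -> forall t, desc y t -> v t = C0.
Proof.
  intros Hy t Ht. destruct (subtree_list y) as [T [HT HiT]].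
  pose proof (Green_identity y T HT HiT) as G. rewrite Hy in G.
  replace (Cmul (RtoC (lam y)) (Csub (Cmul (Cconj C0) (v (par y))) (Cmul (Cconj (v (par y))) C0)))
    with C0 in G by (apply Cplx_eq; simpl; ring).
  apply Cmul_eq0_r in G; [|apply Csub_conj_neq0; auto].
  assert (HS : sum_norm2 T v = 0) by (injection G; auto).
  apply Cnorm2_eq0, (Rsum_nonneg_eq0 T (fun x => Cnorm2 (v x))); auto.
  - intros; apply Cnorm2_nonneg.
  - apply HiT; auto.
Qed.

Lemma eigenfunction_zero_par y : v y = C0 -> (forall t, desc y t -> v t = C0) -> v (par y) = C0.
Proof.
  intros Hy Ht. pose proof (Hv y) as H. unfold Japply in H.
  rewrite Hy, Csum_eq0 in H.
  2:{ intros c Hc. rewrite Ht. - ring. - exists 1%nat. simpl. apply In_ch; auto. }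
  apply (Cmul_eq0_r (RtoC (lam y))); [apply lam_neq0|].
  rewrite <- (Cplx_eq (Cmul z C0) C0) by (simpl; ring). rewrite <- H. ring.
Qed.

Lemma eigenfunction_nonvanishing x : v x <> C0.
Proof.
  intros H0.
  assert (A : forall m, v (Nat.iter m par x) = C0).
  { induction m; simpl; auto.
    apply eigenfunction_zero_par; auto. apply eigenfunction_zero_subtree; auto. }
  destruct Hv0 as [t Ht]. apply Ht.
  destruct (common_iterate x t) as [m [n Hmn]].
  apply (eigenfunction_zero_subtree (Nat.iter m par x)); auto. exists n; auto.
Qed.

(* Adding a multiple of chi w v moves a delta at w to par w, since Jz v = 0. *)
Lemma Jz_range_delta_ancestor x N : exists Phi, finsupp Phi /\ forall t,
  Jz Phi t = Csub (delta x t)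
                  (Cmul (Cdiv (v x) (v (Nat.iter N par x))) (delta (Nat.iter N par x) t)).
Proof.
  induction N as [|N [Phi [HPf HP]]].
  - exists (fun _ => C0). split; [apply finsupp_zero|]. intros t. rewrite Jz_zero. simpl.
    field. apply eigenfunction_nonvanishing.
  - set (w := Nat.iter N par x) in *.
    set (c := Cdiv (Copp (Cdiv (v x) (v w))) (Cmul (RtoC (lam w)) (v (par w)))).
    exists (fun t => Cadd (Phi t) (Cmul c (chi w v t))). split.
    + apply finsupp_add; auto. apply finsupp_scale, chi_finsupp.
    + intros t. rewrite Jz_add, Jz_scale, HP, Jz_chi.
      replace (chi w (Jz v) t) with C0
        by (unfold chi; destruct (dec (desc w t)); auto; rewrite Jz_eigenfunction; auto).
      simpl. fold w. unfold c. field.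
      repeat split; try apply eigenfunction_nonvanishing; apply lam_neq0.
Qed.

(* Green's identity is exactly what makes the two boundary terms at par w cancel. *)
Lemma Jz_range_delta_subtree (w : V) T : NoDup T -> (forall t, In t T <-> desc w t) ->
  0 < sum_norm2 T v ->
  exists Psi, finsupp Psi /\ forall t,
  Jz Psi t = Csub (delta w t)
                  (Cmul (Cmul (v w) (RtoC (/ sum_norm2 T v))) (chi w (fun s => Cconj (v s)) t)).
Proof.
  intros HT HiT HS.
  set (S := sum_norm2 T v) in *.
  set (k := Cinv (Cmul (Csub z (Cconj z)) (RtoC S))).
  exists (fun t => Cmul k (Csub (Cmul (v w) (chi w (fun s => Cconj (v s)) t))
                               (Cmul (Cconj (v w)) (chi w v t)))).
  split.
  - apply finsupp_scale, finsupp_sub; apply finsupp_scale, chi_finsupp.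
  - intros t. rewrite Jz_scale, Jz_sub, !Jz_scale, !Jz_chi.
    replace (chi w (Jz v) t) with C0
      by (unfold chi; destruct (dec (desc w t)); auto; rewrite Jz_eigenfunction; auto).
    replace (chi w (Jz (fun x => Cconj (v x))) t)
      with (Cmul (Csub (Cconj z) z) (chi w (fun x => Cconj (v x)) t)).
    2:{ unfold chi, Jz. destruct (dec (desc w t)); [|ring].
        rewrite Japply_conj, Hv, Cconj_mul. ring. }
    pose proof (Green_identity w T HT HiT) as G. fold S in G.
    set (D := Cmul (RtoC (lam w))
                   (Csub (Cmul (Cconj (v w)) (v (par w))) (Cmul (Cconj (v (par w))) (v w)))) in *.
    transitivity (Cmul k (Cadd (Cmul (Copp (Csub z (Cconj z)))
                                     (Cmul (v w) (chi w (fun s => Cconj (v s)) t)))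
                               (Cmul (delta w t) D))).
    { unfold D. ring. }
    rewrite <- G. unfold k. rewrite RtoC_inv by lra.
    field. split; [apply RtoC_neq0; lra|apply Csub_conj_neq0; auto].
Qed.

Lemma subtree_mass_unbounded : ~ l2 v -> forall x M, exists N T, NoDup T /\
  (forall t, In t T <-> desc (Nat.iter N par x) t) /\ M < sum_norm2 T v.
Proof.
  intros Hn x M.
  assert (exists L, NoDup L /\ M < sum_norm2 L v) as [L [HL HM]].
  { apply NNPP; intro H. apply Hn. exists M. intros L HL.
    apply Rnot_lt_le. intro Hc. apply H. eauto. }
  destruct (common_ancestor x L) as [N HN].
  destruct (subtree_list (Nat.iter N par x)) as [T [HT HiT]].
  exists N, T. split; auto. split; auto.
  eapply Rlt_le_trans; eauto. apply Rsum_le_incl; auto.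
  - intros t Ht; apply HiT; auto.
  - intros; apply Cnorm2_nonneg.
Qed.

(* Combining the two lemmas above for a far ancestor w of x: the error term
   (v x / S) chi_w v-bar has squared norm |v x|^2 / S, where S is the mass of v below w. *)
Lemma Jz_range_approx_delta : ~ l2 v -> forall x eps, 0 < eps -> exists Phi, finsupp Phi /\
  l2_bound (fun t => Csub (Jz Phi t) (delta x t)) eps.
Proof.
  intros Hn x eps Heps.
  destruct (subtree_mass_unbounded Hn x (Cnorm2 (v x) / eps)) as [N [T [HT [HiT HM]]]].
  set (w := Nat.iter N par x) in *. set (S := sum_norm2 T v) in *.
  assert (HS : 0 < S).
  { eapply Rle_lt_trans; [|apply HM]. apply Rmult_le_pos; [apply Cnorm2_nonneg|].
    left; apply Rinv_0_lt_compat; auto. }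
  destruct (Jz_range_delta_ancestor x N) as [Phi1 [HP1 HJ1]]. fold w in HJ1.
  destruct (Jz_range_delta_subtree w T HT HiT HS) as [Psi [HP2 HJ2]]. fold S in HJ2.
  set (c := Cdiv (v x) (v w)).
  exists (fun t => Cadd (Phi1 t) (Cmul c (Psi t))). split.
  - apply finsupp_add; auto. apply finsupp_scale; auto.
  - apply (l2_bound_ext (fun t => Cmul (Copp (Cmul (v x) (RtoC (/ S))))
                                       (chi w (fun s => Cconj (v s)) t))).
    { intros t. rewrite Jz_add, Jz_scale, HJ1, HJ2. unfold c. field.
      apply eigenfunction_nonvanishing. }
    eapply l2_bound_mono; [|apply l2_bound_scale].
    2:{ eapply l2_bound_mono; [|apply (finsupp_l2_bound _ T HT (chi_support w _ T HiT))].
        apply Req_le. unfold sum_norm2. apply Rsum_ext_in. intros t Ht.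
        unfold chi. destruct (dec (desc w t)); [apply Cnorm2_conj|].
        exfalso; apply n, HiT; auto. }
    rewrite Cnorm2_opp, Cnorm2_mul, Cnorm2_RtoC.
    change (Rsum T (fun t => Cnorm2 (v t))) with S.
    assert (H1 : Cnorm2 (v x) < eps * S).
    { apply (Rmult_lt_compat_l eps) in HM; auto.
      replace (eps * (Cnorm2 (v x) / eps)) with (Cnorm2 (v x)) in HM by (field; lra). lra. }
    replace (Cnorm2 (v x) * (/ S * / S) * S) with (Cnorm2 (v x) / S) by (field; lra).
    apply Rlt_le. apply (Rmult_lt_reg_r S); auto.
    replace (Cnorm2 (v x) / S * S) with (Cnorm2 (v x)) by (field; lra). lra.
Qed.

Lemma Jz_range_approx_finsupp : ~ l2 v -> forall K t, NoDup K -> (forall s, ~ In s K -> t s = C0) ->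
  forall eps, 0 < eps -> exists Phi, finsupp Phi /\ l2_bound (fun s => Csub (Jz Phi s) (t s)) eps.
Proof.
  intros Hn K. induction K as [|k K IH]; intros t HK Ht eps He.
  - exists (fun _ => C0). split; [apply finsupp_zero|]. apply l2_bound_eq0; [|lra].
    intros s. rewrite Jz_zero, Ht; auto. ring.
  - inversion HK; subst.
    set (t' := fun s => if dec (s = k) then C0 else t s).
    destruct (IH t' H2) with (eps := eps / 4) as [P' [HP'f HP']].
    { intros s Hs. unfold t'. destruct (dec (s = k)); auto. apply Ht. intros [->|Hs']; auto. }
    { lra. }
    set (ck := Cnorm2 (t k)). assert (Hck : 0 <= ck) by apply Cnorm2_nonneg.
    destruct (Jz_range_approx_delta Hn k (eps / (4 * (ck + 1)))) as [Pk [HPkf HPk]].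
    { apply Rdiv_lt_0_compat; lra. }
    exists (fun s => Cadd (Cmul (t k) (Pk s)) (P' s)). split.
    + apply finsupp_add; auto. apply finsupp_scale; auto.
    + eapply l2_bound_mono;
        [|eapply l2_bound_ext; [|apply (l2_bound_add _ _ _ _ (l2_bound_scale (t k) _ _ HPk) HP')]].
      * fold ck. assert (ck * (eps / (4 * (ck + 1))) <= eps / 4).
        { apply (Rmult_le_reg_r (4 * (ck + 1))); [lra|].
          replace (ck * (eps / (4 * (ck + 1))) * (4 * (ck + 1))) with (ck * eps)
            by (field; lra). nra. }
        lra.
      * intros s. rewrite Jz_add, Jz_scale. unfold t'.
        destruct (dec (s = k)) as [->|Hsk].
        -- rewrite delta_same. ring.
        -- rewrite delta_other; auto. ring.
Qed.

Lemma Jz_range_dense : ~ l2 v -> forall h, l2 h ->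
  exists phi : nat -> V -> Cplx, (forall k, finsupp (phi k)) /\ l2_conv (fun k => Jz (phi k)) h.
Proof.
  intros Hn h Hh.
  assert (Hex : forall k : nat, exists Phi, finsupp Phi /\
            l2_bound (fun s => Csub (Jz Phi s) (h s)) (/ (INR k + 1))).
  { intros k.
    destruct (l2_restrict_approx h Hh (/ (INR k + 1) / 4)) as [K [HK HKb]].
    { apply Rdiv_lt_0_compat; [apply Rinv_0_lt_compat; pose proof (pos_INR k)|]; lra. }
    destruct (Jz_range_approx_finsupp Hn K (restrict K h) HK)
      with (eps := / (INR k + 1) / 4) as [P [HPf HP]].
    { intros s Hs. unfold restrict. destruct (dec (In s K)); tauto. }
    { apply Rdiv_lt_0_compat; [apply Rinv_0_lt_compat; pose proof (pos_INR k)|]; lra. }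
    exists P. split; auto.
    eapply l2_bound_mono; [|eapply l2_bound_ext; [|apply (l2_bound_sub _ _ _ _ HP HKb)]].
    - lra.
    - intros s; simpl. ring. }
  exists (fun k => proj1_sig (constructive_indefinite_description _ (Hex k))).
  split.
  - intros k. apply (proj2_sig (constructive_indefinite_description _ (Hex k))).
  - intros e He. destruct (eventually_inv_succ_lt e He) as [N HN]. exists N. intros k Hk.
    eapply l2_bound_mono; [|apply (proj2_sig (constructive_indefinite_description _ (Hex k)))].
    left; auto.
Qed.

(* g x is close to sum (Jz Phi) g = sum Phi (Jz g) = 0 when Jz Phi is close to delta x. *)
Lemma Jz_kernel_trivial : ~ l2 v -> forall g, l2 g -> (forall x, Jz g x = C0) ->
  forall x, g x = C0.
Proof.
  intros Hn g [Mg HMg] HJg x. pose proof (l2_bound_nonneg _ _ HMg) as HMg0.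
  apply Cnorm2_le_all_eq0. intros e He.
  destruct (Jz_range_approx_delta Hn x (e / (Mg + 1))) as [P [HPf HPb]].
  { apply Rdiv_lt_0_compat; lra. }
  destruct (finsupp_NoDup _ HPf) as [K [HK HKz]].
  destruct (exists_NoDup_cover (nbhds K ++ [x])) as [L [HL HiL]].
  assert (Hi : incl (nbhds K) L) by (intros s Hs; apply HiL, in_or_app; auto).
  assert (Hx : In x L) by (apply HiL, in_or_app; right; left; auto).
  assert (H0 : Csum L (fun s => Cmul (Jz P s) (g s)) = C0).
  { unfold Jz.
    rewrite (Csum_ext_in L _ (fun s => Csub (Cmul (J P s) (g s)) (Cmul z (Cmul (P s) (g s)))))
      by (intros; ring).
    rewrite Csum_sub, Csum_mull, (Japply_symmetric P g K L HK HKz HL Hi), <- Csum_mull,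
      <- Csum_sub.
    apply Csum_eq0. intros s _. pose proof (HJg s) as E. unfold Jz in E.
    replace (Csub (Cmul (P s) (J g s)) (Cmul z (Cmul (P s) (g s))))
      with (Cmul (P s) (Csub (J g s) (Cmul z (g s)))) by ring.
    rewrite E. ring. }
  assert (E : g x = Copp (Csum L (fun s => Cmul (Csub (Jz P s) (delta x s)) (g s)))).
  { rewrite (Csum_ext_in L _ (fun s => Csub (Cmul (Jz P s) (g s)) (Cmul (delta x s) (g s))))
      by (intros; ring).
    rewrite Csum_sub, H0, Csum_delta_mul; auto. ring. }
  rewrite E, Cnorm2_opp.
  eapply Rle_trans; [apply (Csum_mul_le L _ _ _ _ HL HPb HMg)|].
  apply (Rmult_le_reg_r (Mg + 1)); [lra|].
  replace (e / (Mg + 1) * Mg * (Mg + 1)) with (e * Mg) by (field; lra). nra.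
Qed.

Lemma adjoint_sub_closure : ~ l2 v -> forall u w, adjoint (closure T) u w -> closure T u w.
Proof.
  intros Hn u w Had.
  pose proof (adjoint_Japply u w Had) as HJ.
  destruct Had as [Hu [Hw _]].
  set (h := fun x => Csub (w x) (Cmul z (u x))).
  destruct (Jz_range_dense Hn h (l2_sub _ _ Hw (l2_scale z _ Hu))) as [phi [Hphi Ch]].
  destruct (Jz_approx_converges phi h Hphi Ch) as [f [Cf HJf]].
  assert (Hfu : forall x, f x = u x).
  { intros x. apply Csub_eq0. revert x. apply Jz_kernel_trivial; auto.
    - apply l2_sub; auto. apply (l2_conv_l2 phi); auto. intros k; apply finsupp_l2; auto.
    - intros x. rewrite Jz_sub, HJf. unfold h, Jz. rewrite HJ. ring. }
  exists phi, (fun k => J (phi k)). split; [|split].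
  - intros k. split; auto.
  - apply (l2_conv_ext phi phi f u); auto.
  - apply (l2_conv_ext (fun k x => Cadd (Jz (phi k) x) (Cmul z (phi k x))) _
                       (fun x => Cadd (h x) (Cmul z (f x)))).
    + intros k x. unfold Jz. ring.
    + intros x. unfold h. rewrite Hfu. ring.
    + apply l2_conv_add; [exact Ch|apply l2_conv_scale; exact Cf].
Qed.

Lemma eigenfunction_in_adjoint : l2 v -> adjoint (closure T) v (fun x => Cmul z (v x)).
Proof.
  intros Hl. split; [auto|split; [apply l2_scale; auto|]].
  intros f g Hfg. pose proof (closure_l2 _ _ Hfg) as [Hf Hg].
  destruct Hfg as [fn [gn [HTf [Cf Cg]]]].
  apply (inner_eq_of_approx f g v _ fn gn (fun _ => v) (fun _ x => Cmul z (v x))); auto.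
  - apply l2_scale; auto.
  - apply l2_conv_const.
  - apply (l2_conv_const (fun x => Cmul z (v x))).
  - intros n m. destruct (HTf n) as [Hfn Hgn].
    destruct (finsupp_NoDup _ Hfn) as [K [HK HKz]].
    exists (nbhds K). intros L HL Hi.
    rewrite (Csum_ext_in L _ (fun x => Cmul (Cconj (J (fn n) x)) (v x)))
      by (intros; rewrite Hgn; auto).
    rewrite (Japply_symmetric_conj (fn n) v K L HK HKz HL Hi).
    apply Csum_ext_in. intros; rewrite Hv; auto.
Qed.

End Eigenfunction.
End NonrealSpectralParameter.
End Jacobi.
End Tree.

Theorem corollary4 (V : Type) (par : V -> V) (lev : V -> nat) (ch : V -> list V)
  (Htree : leveled_tree par lev ch)
  (lam beta : V -> R) (Hlam : forall x, 0 < lam x)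
  (z : Cplx) (Hz : im z <> 0)
  (v : V -> Cplx) (Hv0 : exists x, v x <> C0)
  (Hv : forall x, Japply par ch lam beta v x = Cmul z (v x)) :
  essentially_selfadjoint (J_fin par ch lam beta) <-> ~ l2 v.
Proof.
  split.
  - intros Hesa Hl2. destruct Hv0 as [x Hx]. apply Hx.
    apply (closure_no_eigenvector V par lev ch Htree lam beta z Hz v); auto.
    apply Hesa, (eigenfunction_in_adjoint V par lev ch Htree lam beta z v Hv Hl2).
  - intros Hn u w. split.
    + apply (closure_sub_adjoint V par lev ch Htree lam beta).
    + apply (adjoint_sub_closure V par lev ch Htree lam beta z Hz Hlam v Hv0 Hv Hn).
Qed.
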